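(* (1) For any binary operator $\Box$ on a set $\mathbb D$, any (possibly infinite) system of pure equations $x=f_x$ ($x\in X$), any initial mapping $\rho_0:X\to\mathbb D$ and any unknown $x_0$, if algorithm SLR$_1$ (defined below) terminates, then it returns a partial $\Box$-solution $(\mathsf{dom},\rho)$ with $x_0\in\mathsf{dom}$. (2) If $\mathbb D$ is a directed set, every right-hand side is monotonic, and $\Box=\boxdot$, then for any initial mapping $\rho_0$ and any $x_0$, SLR$_1$ terminates (and thus returns a partial post solution containing $x_0$ in its domain) whenever only finitely many unknowns are ever added to $\mathsf{dom}$ during the run.
   Context: A right-hand side $f$ is pure if it is given as a finite-depth (well-founded) query tree: either $\mathsf{Return}(d)$ with $d\in\mathbb D$, or $\mathsf{Query}(y,k)$ with $y\in X$ and $k:\mathbb D\to$ tree; $f$ is evaluated w.r.t. a lookup function $g:X\to\mathbb D$ by answering each query $y$ with $g(y)$ until a value is returned; $f\rho$ denotes evaluation with $g=\rho$, and $\mathsf{dep}_x\rho$ is the set of unknowns queried when evaluating $f_x\rho$. A partial $\Box$-solution is a pair of a set $\mathsf{dom}\subseteq X$ and $\rho:\mathsf{dom}\to\mathbb D$ such that for all $x\in\mathsf{dom}$: $\mathsf{dep}_x\rho\subseteq\mathsf{dom}$ and $\rho[x]=\rho[x]\,\Box\, f_x\rho$. (Partial post solution: same but $\rho[x]\sqsupseteq f_x\rho$.) Monotonic: $\rho\sqsubseteq\rho'$ pointwise (total maps) implies $f_x\rho\sqsubseteq f_x\rho'$. Algorithm SLR$_1$: global state: set $\mathsf{dom}$,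 map $\rho$ on $\mathsf{dom}$, integer $\mathsf{count}$, map $\mathsf{key}:\mathsf{dom}\to\mathbb Z$, map $\mathsf{infl}$ from unknowns to sets of unknowns (default $\emptyset$), set $\mathsf{stable}$, priority queue $Q$ keyed by $\mathsf{key}$ (no duplicates). $\mathsf{init}(y)$: $\mathsf{dom}:=\mathsf{dom}\cup\{y\}$; $\mathsf{key}[y]:=-\mathsf{count}$; $\mathsf{count}:=\mathsf{count}+1$; $\mathsf{infl}[y]:=\{y\}$; $\rho[y]:=\rho_0[y]$. $\mathsf{eval}(x,y)$: if $y\notin\mathsf{dom}$ then $\mathsf{init}(y)$; $\mathsf{solve}(y)$; end; $\mathsf{infl}[y]:=\mathsf{infl}[y]\cup\{x\}$; return $\rho[y]$. $\mathsf{solve}(x)$: if $x\notin\mathsf{stable}$ then: $\mathsf{stable}:=\mathsf{stable}\cup\{x\}$; $tmp:=\rho[x]\,\Box\, v$ where $v$ is the result of evaluating the tree $f_x$ answering each query $y$ by $\mathsf{eval}(x,y)$ (reading $\rho[x]$ before the evaluation); if $tmp\neq\rho[x]$ then: $W:=\mathsf{infl}[x]\cup\{x\}$; add every $y\in W$ to $Q$; $\rho[x]:=tmp$; $\mathsf{infl}[x]:=\emptyset$; $\mathsf{stable}:=\mathsf{stable}\setminus W$; while $Q\neq\emptyset$ and the minimal key in $Q$ is $\le\mathsf{key}[x]$: remove the element of $Q$ with minimal key and call $\mathsf{solve}$ on it. Main: $\mathsf{stable},\mathsf{dom}:=\emptyset$, $\mathsf{infl}$ empty, $\rho$ empty, $Q$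 empty, $\mathsf{count}:=0$; $\mathsf{init}(x_0)$; $\mathsf{solve}(x_0)$; return $(\mathsf{dom},\rho)$. Widening $\nabla$: $a\sqsubseteq a\nabla b$, $b\sqsubseteq a\nabla b$, no infinite sequence with $a_{i+1}=a_i\nabla b_i\neq a_i$ for all $i$. Narrowing $\triangle$: $b\sqsubseteq a$ implies $b\sqsubseteq a\triangle b\sqsubseteq a$, no infinite sequence with $b_i\sqsubseteq a_i$, $a_{i+1}=a_i\triangle b_i\neq a_i$ for all $i$. $a\boxdot b=a\triangle b$ if $b\sqsubseteq a$, else $a\nabla b$. *)

(* Classical decisions (excluded_middle_informative) are used
   for the tests performed by the algorithm, so that X and D are arbitrary types. *)
From Stdlib Require Import ZArith List ClassicalEpsilon.
Import ListNotations.
Set Implicit Arguments.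

(* ---------- Pure right-hand sides: well-founded query trees ---------- *)
Inductive tree (X D : Type) : Type :=
| Return : D -> tree X D
| Query : X -> (D -> tree X D) -> tree X D.
Arguments Return {X D} _.
Arguments Query {X D} _ _.

Fixpoint evalT {X D : Type} (g : X -> D) (t : tree X D) : D :=
  match t with
  | Return d => d
  | Query y k => evalT g (k (g y))
  end.

Fixpoint dep {X D : Type} (g : X -> D) (t : tree X D) : X -> Prop :=
  match t with
  | Return _ => fun _ => False
  | Query y k => fun z => z = y \/ dep g (k (g y)) z
  end.

(* (dom, rho) : rho is only relevant on dom; since dep ⊆ dom, the evaluation
   only reads values on dom. *)
Definition partial_box_solution {X D : Type} (box : D -> D -> D)
    (f : X -> tree X D) (dom : X -> Prop) (rho : X -> D) : Prop :=
  forall x, dom x ->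
    (forall y, dep rho (f x) y -> dom y) /\ rho x = box (rho x) (evalT rho (f x)).

Definition partial_post_solution {X D : Type} (le : D -> D -> Prop)
    (f : X -> tree X D) (dom : X -> Prop) (rho : X -> D) : Prop :=
  forall x, dom x ->
    (forall y, dep rho (f x) y -> dom y) /\ le (evalT rho (f x)) (rho x).

Definition directed {D : Type} (le : D -> D -> Prop) : Prop :=
  (forall a, le a a) /\ (forall a b c, le a b -> le b c -> le a c) /\
  (forall a b, exists c, le a c /\ le b c).

Definition monotonic {X D : Type} (le : D -> D -> Prop) (f : X -> tree X D) : Prop :=
  forall x (rho rho' : X -> D), (forall y, le (rho y) (rho' y)) ->
    le (evalT rho (f x)) (evalT rho' (f x)).

Definition is_widening {D : Type} (le : D -> D -> Prop) (wid : D -> D -> D) : Prop :=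
  (forall a b, le a (wid a b)) /\ (forall a b, le b (wid a b)) /\
  ~ (exists (a b : nat -> D), forall i, a (S i) = wid (a i) (b i) /\ a (S i) <> a i).

Definition is_narrowing {D : Type} (le : D -> D -> Prop) (nar : D -> D -> D) : Prop :=
  (forall a b, le b a -> le b (nar a b) /\ le (nar a b) a) /\
  ~ (exists (a b : nat -> D), forall i,
        le (b i) (a i) /\ a (S i) = nar (a i) (b i) /\ a (S i) <> a i).

Definition dec (P : Prop) : {P} + {~ P} := excluded_middle_informative P.

Definition boxdot {D : Type} (le : D -> D -> Prop) (wid nar : D -> D -> D)
    (a b : D) : D :=
  if dec (le b a) then nar a b else wid a b.

Record state (X D : Type) := mkState {
  sdom : X -> Prop;
  srho : X -> D;
  scount : Z;
  skey : X -> Z;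
  sinfl : X -> list X;
  sstable : X -> Prop;
  sQ : list X }.
Arguments mkState {X D}.

(* results of a run with fuel: either finished, or out of fuel together with
   the (genuine, intermediate) state reached at that point *)
Inductive result (X D A : Type) :=
| Done : state X D -> A -> result X D A
| OutOfFuel : state X D -> result X D A.
Arguments Done {X D A}.
Arguments OutOfFuel {X D A}.

Definition res_state {X D A} (r : result X D A) : state X D :=
  match r with Done s _ => s | OutOfFuel s => s end.

Definition upd {X A : Type} (g : X -> A) (x : X) (v : A) : X -> A :=
  fun y => if dec (y = x) then v else g y.

Definition addQ {X : Type} (Q : list X) (y : X) : list X :=
  if dec (In y Q) then Q else Q ++ [y].

Definition removeQ {X : Type} (y : X) (Q : list X) : list X :=
  filter (fun z => if dec (z = y) then false else true) Q.

Fixpoint minQ {X : Type} (key : X -> Z) (Q : list X) : option X :=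
  match Q with
  | [] => None
  | y :: Q' => match minQ key Q' with
               | None => Some y
               | Some z => if Z.leb (key y) (key z) then Some y else Some z
               end
  end.

Section SLR1.
Variables (X D : Type) (box : D -> D -> D) (f : X -> tree X D) (rho0 : X -> D).

Definition empty_state : state X D :=
  mkState (fun _ => False) rho0 0%Z (fun _ => 0%Z) (fun _ => []) (fun _ => False) [].

Definition init (y : X) (s : state X D) : state X D :=
  mkState (fun z => z = y \/ sdom s z)
          (upd (srho s) y (rho0 y))
          (scount s + 1)%Z
          (upd (skey s) y (- scount s)%Z)
          (upd (sinfl s) y [y])
          (sstable s)
          (sQ s).

Fixpoint solve (n : nat) (x : X) (s : state X D) {struct n} : result X D unit :=
  match n with
  | O => OutOfFuel s
  | S n' =>
    if dec (sstable s x) then Done s tt else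
    let s1 := mkState (sdom s) (srho s) (scount s) (skey s) (sinfl s)
                      (fun z => z = x \/ sstable s z) (sQ s) in
    let old := srho s1 x in
    let ev := fix ev (t : tree X D) (s : state X D) {struct t} : result X D D :=
      match t with
      | Return d => Done s d
      | Query y k =>
        let r := if dec (sdom s y) then Done s tt else solve n' y (init y s) in
        match r with
        | OutOfFuel s' => OutOfFuel s'
        | Done s' _ =>
          let s'' := mkState (sdom s') (srho s') (scount s') (skey s')
                       (upd (sinfl s') y (x :: sinfl s' y)) (sstable s') (sQ s') in
          ev (k (srho s'' y)) s''
        end
      end in
    match ev (f x) s1 with
    | OutOfFuel s2 => OutOfFuel s2
    | Done s2 v =>
      let tmp := box old v in
      if dec (tmp = srho s2 x) then Done s2 tt else
      let W := x :: sinfl s2 x in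
      let s3 := mkState (sdom s2) (upd (srho s2) x tmp) (scount s2) (skey s2)
                  (upd (sinfl s2) x []) (fun z => sstable s2 z /\ ~ In z W)
                  (fold_left addQ W (sQ s2)) in
      loop n' x s3
    end
  end
with loop (n : nat) (x : X) (s : state X D) {struct n} : result X D unit :=
  match n with
  | O => OutOfFuel s
  | S n' =>
    match minQ (skey s) (sQ s) with
    | None => Done s tt
    | Some y =>
      if Z.leb (skey s y) (skey s x) then
        let s' := mkState (sdom s) (srho s) (scount s) (skey s) (sinfl s)
                    (sstable s) (removeQ y (sQ s)) in
        match solve n' y s' with
        | OutOfFuel s'' => OutOfFuel s''
        | Done s'' _ => loop n' x s''
        end
      else Done s tt
    end
  end.

Definition run (x0 : X) (n : nat) : result X D unit :=
  solve n x0 (init x0 empty_state).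

End SLR1.

(* Every call [solve x] preserves an invariant saying that each
   stable unknown outside the current call stack is locally solved and is
   recorded in the [infl] set of every unknown its right-hand side queries.
   Hence a change of value destabilises every unknown whose equation it may
   invalidate, and when the outermost call returns nothing is left unstable.

   A run changes the state only by adding a fresh unknown, by
   bookkeeping that keeps all values, or by updating an unknown [x] all of whose
   newer unknowns are stable and locally solved.  With the combined operator,
   such an update widens while [x] is still in its ascending phase and narrows
   once every unknown up to [x] satisfies its post condition; by monotonicity
   narrowing preserves those post conditions.  Comparing unknowns from the
   oldest one on by (phase, value) therefore decreases lexicographically at
   each update, and this order is well founded on states whose domain stays in
   the finite set [L], because widening and narrowing sequences stabilise. *)

From Stdlib Require Import ZArith List Lia ClassicalEpsilon Relations Wellfounded.
Import ListNotations.
Set Implicit Arguments.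

Section Queue.
Variable X : Type.

Lemma upd_eq {A : Type} (g : X -> A) x v : upd g x v x = v.
Proof. unfold upd. destruct (dec (x = x)); congruence. Qed.
Lemma upd_neq {A : Type} (g : X -> A) x v z : z <> x -> upd g x v z = g z.
Proof. unfold upd. destruct (dec (z = x)); congruence. Qed.

Lemma In_addQ (Q : list X) y z : In z (addQ Q y) <-> In z Q \/ z = y.
Proof. unfold addQ. destruct (dec (In y Q)).
  - split; [auto|]. intros [H|H]; subst; auto.
  - rewrite in_app_iff. simpl. intuition.
Qed.

Lemma In_fold_addQ (W Q : list X) z : In z (fold_left addQ W Q) <-> In z Q \/ In z W.
Proof. revert Q. induction W as [|w W IH]; intros Q; simpl.
  - intuition.
  - rewrite IH, In_addQ. intuition.
Qed.

Lemma In_removeQ (Q : list X) y z : In z (removeQ y Q) <-> In z Q /\ z <> y.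
Proof. unfold removeQ. rewrite filter_In. destruct (dec (z = y)); intuition; discriminate. Qed.

Lemma minQ_some (k : X -> Z) Q y : minQ k Q = Some y -> In y Q /\ forall z, In z Q -> (k y <= k z)%Z.
Proof. revert y. induction Q as [|a Q IH]; intros y H; simpl in H; [discriminate|].
  destruct (minQ k Q) as [m|] eqn:Hm.
  - specialize (IH m eq_refl). destruct (Z.leb (k a) (k m)) eqn:Hle; inversion H; subst; clear H.
    + apply Z.leb_le in Hle. split; [left; auto|]. intros z [<-|Hz]; [lia|]. specialize (proj2 IH z Hz); lia.
    + apply Z.leb_gt in Hle. split; [right; tauto|]. intros z [<-|Hz]; [lia|]. apply (proj2 IH z Hz).
  - inversion H; subst. destruct Q as [|b Q']. split; [left; auto|]. intros z [<-|[]]; lia.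
    simpl in Hm. destruct (minQ k Q'); [destruct (Z.leb _ _)|]; discriminate.
Qed.

Lemma minQ_none (k : X -> Z) Q : minQ k Q = None -> Q = [].
Proof. destruct Q as [|a Q]; simpl; auto. destruct (minQ k Q); [destruct (Z.leb _ _)|]; discriminate. Qed.

End Queue.

Lemma evalT_agree (X D : Type) (r r' : X -> D) t : (forall d, dep r t d -> r' d = r d) ->
  evalT r' t = evalT r t /\ (forall d, dep r' t d <-> dep r t d).
Proof. induction t as [v|y k IH]; intros H; simpl.
  - split; tauto.
  - assert (Hy : r' y = r y) by (apply H; simpl; auto). rewrite Hy.
    destruct (IH (r y)) as [H1 H2]. { intros d Hd. apply H. simpl. auto. }
    split; auto. intros d. rewrite H2. tauto.
Qed.

Section Run.
Variables (X D : Type) (box : D -> D -> D) (f : X -> tree X D) (rho0 : X -> D).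
Notation state := (state X D).

Definition add_infl (x y : X) (s' : state) : state :=
  mkState (sdom s') (srho s') (scount s') (skey s')
          (upd (sinfl s') y (x :: sinfl s' y)) (sstable s') (sQ s').

Definition bindR {A B : Type} (r : result X D A) (k : state -> A -> result X D B) : result X D B :=
  match r with Done s a => k s a | OutOfFuel s => OutOfFuel s end.

(* The evaluator local to [solve], which answers queries by [eval], as a
   function of the recursive solver [sv]. *)
Fixpoint eval_rhs (sv : X -> state -> result X D unit) (x : X) (t : tree X D) (s : state)
  : result X D D :=
  match t with
  | Return d => Done s d
  | Query y k =>
    bindR (if dec (sdom s y) then Done s tt else sv y (init rho0 y s))
      (fun s' _ => eval_rhs sv x (k (srho (add_infl x y s') y)) (add_infl x y s'))
  end.

Definition mark_stable (x : X) (s : state) : state :=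
  mkState (sdom s) (srho s) (scount s) (skey s) (sinfl s)
          (fun z => z = x \/ sstable s z) (sQ s).

Definition set_value (x : X) (s2 : state) (tmp : D) : state :=
  mkState (sdom s2) (upd (srho s2) x tmp) (scount s2) (skey s2)
          (upd (sinfl s2) x []) (fun z => sstable s2 z /\ ~ In z (x :: sinfl s2 x))
          (fold_left addQ (x :: sinfl s2 x) (sQ s2)).

Definition pop_queue (y : X) (s : state) : state :=
  mkState (sdom s) (srho s) (scount s) (skey s) (sinfl s) (sstable s) (removeQ y (sQ s)).

Lemma solve_unfold n x s : solve box f rho0 (S n) x s =
  if dec (sstable s x) then Done s tt else
  bindR (eval_rhs (solve box f rho0 n) x (f x) (mark_stable x s))
    (fun s2 v => if dec (box (srho s x) v = srho s2 x) then Done s2 tt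
                 else loop box f rho0 n x (set_value x s2 (box (srho s x) v))).
Proof.
  simpl. destruct (dec (sstable s x)); [reflexivity|].
  match goal with |- match ?a with _ => _ end = bindR ?b _ => replace a with b; [reflexivity|] end.
  unfold mark_stable. generalize (mkState (sdom s) (srho s) (scount s) (skey s) (sinfl s)
    (fun z => z = x \/ sstable s z) (sQ s)) (f x). intros s0 t. revert s0.
  induction t as [d|y k IH]; intros s0; simpl; [reflexivity|].
  destruct (dec (sdom s0 y)); [apply IH|]. destruct (solve box f rho0 n y (init rho0 y s0)); [apply IH|reflexivity].
Qed.

Lemma loop_unfold n x s : loop box f rho0 (S n) x s =
  match minQ (skey s) (sQ s) with
  | None => Done s tt
  | Some y => if Z.leb (skey s y) (skey s x)
              then bindR (solve box f rho0 n y (pop_queue y s)) (fun s'' _ => loop box f rho0 n x s'')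
              else Done s tt
  end.
Proof. reflexivity. Qed.

Lemma eval_rhs_query_old sv x y k s : sdom s y ->
  eval_rhs sv x (Query y k) s = eval_rhs sv x (k (srho s y)) (add_infl x y s).
Proof. intros H. simpl. destruct (dec (sdom s y)); [reflexivity|contradiction]. Qed.

Lemma eval_rhs_query_new sv x y k s : ~ sdom s y ->
  eval_rhs sv x (Query y k) s =
  bindR (sv y (init rho0 y s)) (fun s' _ => eval_rhs sv x (k (srho s' y)) (add_infl x y s')).
Proof. intros H. simpl. destruct (dec (sdom s y)); [contradiction|reflexivity]. Qed.

Definition grows {A : Type} (s : state) (r : result X D A) : Prop :=
  forall z, sdom s z -> sdom (res_state r) z.

Lemma grows_bindR {A B : Type} s (r : result X D A) (k : state -> A -> result X D B) :
  grows s r -> (forall s' a, grows s' (k s' a)) -> grows s (bindR r k).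
Proof. intros Hr Hk z Hz. destruct r as [s' a|s']; simpl in *; auto. apply Hk, Hr, Hz. Qed.

Lemma eval_rhs_grows sv x t s : (forall y s', grows s' (sv y s')) -> grows s (eval_rhs sv x t s).
Proof.
  intros Hsv. revert s. induction t as [d|y k IHt]; intros s z Hz; simpl; auto.
  destruct (dec (sdom s y)); [apply IHt; simpl; auto|].
  specialize (Hsv y (init rho0 y s) z (or_intror Hz)).
  destruct (sv y (init rho0 y s)) as [s' []|s']; simpl in *; auto. apply IHt; simpl; auto.
Qed.

Lemma solve_loop_grow n :
  (forall x s, grows s (solve box f rho0 n x s)) /\ (forall x s, grows s (loop box f rho0 n x s)).
Proof.
  induction n as [|n [IHs IHl]]; [split; intros x s z Hz; exact Hz|]. split.
  - intros x s. rewrite solve_unfold. destruct (dec (sstable s x)); [intros z Hz; exact Hz|].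
    apply grows_bindR; [intros z Hz; apply eval_rhs_grows; [exact IHs|exact Hz]|].
    intros s2 v. destruct (dec _); [intros z Hz; exact Hz|intros z Hz; apply IHl, Hz].
  - intros x s. rewrite loop_unfold. destruct (minQ (skey s) (sQ s)) as [y|]; [|intros z Hz; exact Hz].
    destruct (Z.leb _ _); [|intros z Hz; exact Hz].
    apply grows_bindR; [intros z Hz; apply IHs, Hz|intros; apply IHl].
Qed.

Lemma solve_grows n x s : grows s (solve box f rho0 n x s).
Proof. apply solve_loop_grow. Qed.

Lemma loop_grows n x s : grows s (loop box f rho0 n x s).
Proof. apply solve_loop_grow. Qed.

Definition dom_within (L : list X) (s : state) : Prop := forall z, sdom s z -> In z L.

Definition eventually (P : nat -> Prop) : Prop := exists N, forall m, N <= m -> P m.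

(* The second alternative is excluded by the hypothesis that domains stay in [L]. *)
Definition settles {A : Type} (L : list X) (r : nat -> result X D A) : Prop :=
  (exists s a, eventually (fun m => r m = Done s a)) \/
  eventually (fun m => ~ dom_within L (res_state (r m))).

Lemma settles_ext {A : Type} L (r r' : nat -> result X D A) :
  (forall m, r' m = r m) -> settles L r -> settles L r'.
Proof.
  intros E [[s [a [N HN]]]|[N HN]]; [left; exists s, a|right]; exists N; intros m Hm; rewrite E; auto.
Qed.

Lemma settles_S {A : Type} L (r : nat -> result X D A) : settles L (fun m => r (S m)) -> settles L r.
Proof.
  intros [[s [a [N HN]]]|[N HN]]; [left; exists s, a|right]; exists (S N);
    intros [|m] Hm; try lia; apply HN; lia.
Qed.

Lemma settles_escape {A : Type} L s (r : nat -> result X D A) :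
  ~ dom_within L s -> (forall m, grows s (r m)) -> settles L r.
Proof. intros Hs Hr. right. exists 0. intros m _ Hd. apply Hs. intros z Hz. apply Hd, Hr, Hz. Qed.

Lemma settles_bind {A B : Type} L (r : nat -> result X D A) (k : nat -> state -> A -> result X D B) :
  settles L r -> (forall m s a, grows s (k m s a)) ->
  (forall s a, eventually (fun m => r m = Done s a) -> settles L (fun m => k m s a)) ->
  settles L (fun m => bindR (r m) (k m)).
Proof.
  intros [[s [a [N HN]]]|[N HN]] Hgrow Hk.
  - destruct (Hk s a (ex_intro _ N HN)) as [[s' [b [N' HN']]]|[N' HN']];
      [left; exists s', b|right]; exists (max N N'); intros m Hm; rewrite HN by lia; apply HN'; lia.
  - right. exists N. intros m Hm Hd. specialize (HN m Hm).
    destruct (r m) as [s a|s]; simpl in *; auto.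
    apply HN. intros z Hz. apply Hd, Hgrow, Hz.
Qed.

Definition locally_solved (s : state) (z : X) : Prop :=
  (forall d, dep (srho s) (f z) d -> sdom s d /\ In z (sinfl s d)) /\
  srho s z = box (srho s z) (evalT (srho s) (f z)).

Definition wf_state (s : state) : Prop :=
  (forall z, sstable s z -> sdom s z) /\
  (forall z, In z (sQ s) -> sdom s z) /\
  (forall z, In z (sQ s) -> ~ sstable s z) /\
  (0 <= scount s)%Z /\
  (forall z, sdom s z -> - scount s < skey s z <= 0)%Z /\
  (forall z w, sdom s z -> sdom s w -> skey s z = skey s w -> z = w) /\
  (forall z w, In w (sinfl s z) -> sdom s w /\ sdom s z).

(* [E] is the stack of callers whose right-hand sides are being evaluated. *)
Definition pending_inv (E : list X) (s : state) : Prop :=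
  (forall z, sdom s z -> ~ sstable s z -> In z (sQ s) \/ In z E) /\
  (forall z, sdom s z -> sstable s z -> ~ In z E -> locally_solved s z).

Definition infl_closed (K : Z) (s : state) : Prop :=
  forall z w, sdom s z -> (skey s z <= K)%Z -> In w (sinfl s z) -> (skey s w <= K)%Z.

Definition solved_before (x : X) (s : state) : Prop :=
  forall y, sdom s y -> (skey s y < skey s x)%Z -> sstable s y /\ locally_solved s y.

(* The effect of a call on an unknown of key [kx]: older unknowns keep their
   values and stability, and only unknowns of key at most [K] get destabilised. *)
Definition evolves (kx K : Z) (s s' : state) : Prop :=
  (forall z, sdom s z -> sdom s' z) /\
  (forall z, sdom s z -> skey s' z = skey s z) /\
  (forall z, sdom s z -> (kx < skey s z)%Z -> srho s' z = srho s z) /\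
  (forall z, sdom s z -> (kx < skey s z)%Z -> sstable s z \/ In z (sQ s) ->
       sstable s' z \/ In z (sQ s')) /\
  (forall z, sdom s z -> (kx < skey s z)%Z -> sstable s' z ->
       sstable s z /\ forall d, In z (sinfl s d) -> srho s' d = srho s d /\ In z (sinfl s' d)) /\
  (forall z, sdom s z -> (K < skey s z)%Z -> sstable s z -> sstable s' z) /\
  (forall K2, (K <= K2)%Z -> infl_closed K2 s -> infl_closed K2 s') /\
  (forall q, In q (sQ s') -> In q (sQ s) \/ (skey s' q <= K)%Z).

(* The only ways a run changes the state; the termination measure is defined
   along these steps. *)
Definition step_init (s s' : state) : Prop := exists y, ~ sdom s y /\ s' = init rho0 y s.
Definition step_meta (s s' : state) : Prop :=
  (forall z, sdom s' z <-> sdom s z) /\ (forall z, sdom s z -> skey s' z = skey s z) /\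
  (forall z, srho s' z = srho s z).
Definition step_update (s s' : state) : Prop :=
  exists x, sdom s x /\ solved_before x s /\ wf_state s /\
    box (srho s x) (evalT (srho s) (f x)) <> srho s x /\
    (forall z, sdom s' z <-> sdom s z) /\ (forall z, sdom s z -> skey s' z = skey s z) /\
    (forall z, srho s' z = upd (srho s) x (box (srho s x) (evalT (srho s) (f x))) z).
Definition step (s s' : state) : Prop := step_init s s' \/ step_meta s s' \/ step_update s s'.
Definition trace := clos_refl_trans state step.
Definition meta_trace := clos_refl_trans state step_meta.
Definition progress_trace (s s' : state) : Prop :=
  exists s1 s2, trace s s1 /\ (step_init s1 s2 \/ step_update s1 s2) /\ trace s2 s'.

Definition solve_pre (x : X) (E : list X) (K : Z) (s : state) : Prop :=
  wf_state s /\ pending_inv (x :: E) s /\ sdom s x /\ ~ sstable s x /\ ~ In x (sQ s) /\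
  (forall e, In e E -> sdom s e /\ (skey s x < skey s e)%Z) /\ (skey s x <= K)%Z /\
  infl_closed K s /\ solved_before x s.

Definition solve_post (x : X) (E : list X) (K : Z) (s s' : state) : Prop :=
  wf_state s' /\ pending_inv E s' /\ evolves (skey s x) K s s' /\
  ((forall q, In q (sQ s) -> (skey s x < skey s q)%Z) ->
      forall q, In q (sQ s') -> (skey s x < skey s' q)%Z) /\
  ((meta_trace s s' /\ forall q, In q (sQ s') -> In q (sQ s) /\ q <> x) \/ progress_trace s s').

Definition loop_pre (x : X) (E : list X) (K : Z) (s : state) : Prop :=
  wf_state s /\ pending_inv E s /\ sdom s x /\
  (forall e, In e E -> sdom s e /\ (skey s x < skey s e)%Z) /\ (skey s x <= K)%Z /\ infl_closed K s.

Definition loop_post (x : X) (E : list X) (K : Z) (s s' : state) : Prop :=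
  wf_state s' /\ pending_inv E s' /\ evolves (skey s x) K s s' /\
  (forall q, In q (sQ s') -> (skey s x < skey s' q)%Z) /\ trace s s'.

Lemma evolves_trans kx K kx' K' s s1 s2 : wf_state s1 -> evolves kx K s s1 -> evolves kx' K' s1 s2 ->
  (kx' <= kx)%Z -> (K' <= K)%Z -> evolves kx K s s2.
Proof.
  intros HG [a1 [b1 [c1 [d1 [e1 [f1 [g1 h1]]]]]]] [a2 [b2 [c2 [d2 [e2 [f2 [g2 h2]]]]]]] Hk HK.
  refine (conj _ (conj _ (conj _ (conj _ (conj _ (conj _ (conj _ _))))))).
  - auto.
  - intros z Hz. rewrite b2 by auto. auto.
  - intros z Hz Hk2. rewrite c2; auto. rewrite b1 by auto. lia.
  - intros z Hz Hk2 Hs. apply d2; auto. rewrite b1 by auto. lia.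
  - intros z Hz Hk2 Hs. assert (H1 : (kx' < skey s1 z)%Z) by (rewrite b1 by auto; lia).
    destruct (e2 z (a1 z Hz) H1 Hs) as [Hs1 R2]. destruct (e1 z Hz Hk2 Hs1) as [Hs0 R1].
    split; auto. intros d Hd.
    destruct (R1 d Hd) as [R1a R1b]. destruct (R2 d R1b). split; congruence.
  - intros z Hz Hk2 Hs. apply f2; auto. rewrite b1 by auto. lia.
  - intros K2 HK2 HI. apply g2. lia. apply g1; auto.
  - intros q Hq. destruct (h2 q Hq) as [Hq1|Hq1]; [|right; lia].
    destruct (h1 q Hq1) as [Hq0|Hq0]; [left; auto|right].
    destruct HG as [_ [HGQ _]]. rewrite b2 by auto. auto.
Qed.

Lemma meta_trace_trace s1 s2 : meta_trace s1 s2 -> trace s1 s2.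
Proof. induction 1. apply rt_step. right; left; auto. apply rt_refl. eapply rt_trans; eauto. Qed.
Lemma progress_trace_trace s1 s2 : progress_trace s1 s2 -> trace s1 s2.
Proof. intros [a [b [H1 [H2 H3]]]]. eapply rt_trans; [eauto|]. eapply rt_trans; [|eauto].
  apply rt_step. destruct H2; [left|right;right]; auto. Qed.
Lemma progress_trace_l s1 s2 s3 : trace s1 s2 -> progress_trace s2 s3 -> progress_trace s1 s3.
Proof. intros H [a [b [H1 [H2 H3]]]]. exists a, b. split; [eapply rt_trans; eauto|]. auto. Qed.
Lemma progress_trace_r s1 s2 s3 : progress_trace s1 s2 -> trace s2 s3 -> progress_trace s1 s3.
Proof. intros [a [b [H1 [H2 H3]]]] H. exists a, b. repeat split; auto. eapply rt_trans; eauto. Qed.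
Lemma step_meta_trace s1 s2 : step_meta s1 s2 -> trace s1 s2.
Proof. intros; apply rt_step; right; left; auto. Qed.

Inductive infl_path (s : state) (x : X) : tree X D -> tree X D -> Prop :=
| ipath_nil t : infl_path s x t t
| ipath_query y k t : sdom s y -> In x (sinfl s y) -> infl_path s x (k (srho s y)) t -> infl_path s x (Query y k) t.

Lemma infl_path_return s x t v : infl_path s x t (Return v) ->
  evalT (srho s) t = v /\ forall d, dep (srho s) t d -> sdom s d /\ In x (sinfl s d).
Proof. intros H. remember (Return v) as r. induction H; subst; simpl.
  - split; auto. intros d [].
  - destruct IHinfl_path as [Ha Hb]; auto. split; auto. intros d [->|Hd]; auto.
Qed.

Lemma infl_path_snoc s x t y k : infl_path s x t (Query y k) -> sdom s y -> In x (sinfl s y) ->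
  infl_path s x t (k (srho s y)).
Proof. intros H. remember (Query y k) as r. induction H; intros; subst.
  - apply ipath_query; auto. apply ipath_nil.
  - apply ipath_query; auto.
Qed.

Lemma infl_path_transport s s' x t0 t : infl_path s x t0 t ->
  (forall d, sdom s d -> In x (sinfl s d) -> sdom s' d /\ In x (sinfl s' d) /\ srho s' d = srho s d) ->
  infl_path s' x t0 t.
Proof. intros H HT. induction H. apply ipath_nil. destruct (HT y) as [A [B C]]; auto.
  apply ipath_query; auto. rewrite C; auto. Qed.

Lemma locally_solved_transport s s' z : locally_solved s z ->
  (forall d, sdom s d -> In z (sinfl s d) -> sdom s' d /\ In z (sinfl s' d) /\ srho s' d = srho s d) ->
  srho s' z = srho s z -> locally_solved s' z.
Proof. intros [Hc1 Hc2] HT Hz. 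
  destruct (evalT_agree (srho s) (srho s') (f z)) as [E1 E2].
  { intros d Hd. destruct (Hc1 d Hd). apply HT; auto. }
  split.
  - intros d Hd. apply E2 in Hd. destruct (Hc1 d Hd) as [Hd1 Hd2].
    destruct (HT d Hd1 Hd2) as [A [B _]]. split; assumption.
  - rewrite E1, Hz. auto.
Qed.

Ltac evo_split := refine (conj _ (conj _ (conj _ (conj _ (conj _ (conj _ (conj _ _))))))).

Lemma evolves_refl kx K s : evolves kx K s s.
Proof. evo_split; auto; intros z _ _ Hs; split; auto. Qed.

Lemma evolves_add_infl kx K x y s : wf_state s -> sdom s x -> (skey s x <= K)%Z -> evolves kx K s (add_infl x y s).
Proof. intros HG Hx HK. evo_split; simpl.
  - auto.
  - auto.
  - auto.
  - auto.
  - intros z _ _ Hs. split; auto. intros d Hd. split; auto.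
    unfold upd. destruct (dec (d = y)); subst; simpl; auto.
  - auto.
  - intros K2 HK2 HI z w Hz Hkz Hw. simpl in *. unfold upd in Hw. destruct (dec (z = y)); subst.
    + destruct Hw as [<-|Hw]; [lia|]. eapply HI; eauto.
    + eapply HI; eauto.
  - auto.
Qed.

Lemma wf_add_infl x y s : wf_state s -> sdom s x -> sdom s y -> wf_state (add_infl x y s).
Proof. intros [g1 [g2 [g3 [g4 [g5 [g6 g7]]]]]] Hx Hy. unfold wf_state; simpl.
  refine (conj _ (conj _ (conj _ (conj _ (conj _ (conj _ _)))))); auto.
  intros z w Hw. unfold upd in Hw. destruct (dec (z = y)); subst.
  - destruct Hw as [<-|Hw]; auto.
  - auto.
Qed.

Lemma locally_solved_add_infl x y s z : locally_solved s z -> locally_solved (add_infl x y s) z.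
Proof. intros H. apply locally_solved_transport with (s := s); auto. intros d Hd Hz. simpl. repeat split; auto.
  unfold upd. destruct (dec (d = y)); subst; simpl; auto. Qed.

Lemma pending_add_infl E x y s : pending_inv E s -> pending_inv E (add_infl x y s).
Proof. intros [i1 i2]. split; simpl; auto. intros z Hz Hs HE. apply locally_solved_add_infl; auto. Qed.

Lemma key_init y s : skey (init rho0 y s) y = (- scount s)%Z.
Proof. simpl. apply upd_eq. Qed.

Lemma wf_init y s : wf_state s -> ~ sdom s y -> wf_state (init rho0 y s).
Proof. intros [g1 [g2 [g3 [g4 [g5 [g6 g7]]]]]] Hy. unfold wf_state; simpl.
  refine (conj _ (conj _ (conj _ (conj _ (conj _ (conj _ _)))))).
  - auto.
  - auto.
  - auto.
  - lia.
  - intros z [->|Hz]. rewrite upd_eq. lia. rewrite upd_neq by congruence. specialize (g5 z Hz). lia.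
  - intros z w Hz Hw Hk. destruct (dec (z = y)) as [->|Hzy]; destruct (dec (w = y)) as [->|Hwy]; auto.
    + rewrite upd_eq, upd_neq in Hk by auto. destruct Hw as [->|Hw]; [congruence|]. specialize (g5 w Hw). lia.
    + rewrite upd_eq, upd_neq in Hk by auto. destruct Hz as [->|Hz]; [congruence|]. specialize (g5 z Hz). lia.
    + rewrite !upd_neq in Hk by auto. destruct Hz as [->|Hz]; [congruence|]. destruct Hw as [->|Hw]; [congruence|]. auto.
  - intros z w Hw. unfold upd in Hw. destruct (dec (z = y)); subst.
    + destruct Hw as [<-|[]]; auto.
    + destruct (g7 z w Hw); auto.
Qed.

Lemma evolves_init kx K y s : wf_state s -> ~ sdom s y -> (- scount s <= K)%Z -> evolves kx K s (init rho0 y s).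
Proof. intros HG Hy HK. pose proof HG as [g1 [g2 [g3 [g4 [g5 [g6 g7]]]]]]. evo_split; simpl.
  - auto.
  - intros z Hz. apply upd_neq. congruence.
  - intros z Hz _. apply upd_neq. congruence.
  - auto.
  - intros z Hz _ Hs. split; auto. intros d Hd. destruct (g7 d z Hd).
    rewrite !upd_neq by congruence. auto.
  - auto.
  - intros K2 HK2 HI z w Hz Hkz Hw. simpl in *. unfold upd in Hw. destruct (dec (z = y)); subst.
    + destruct Hw as [<-|[]]. rewrite upd_eq in *. lia.
    + destruct Hz as [->|Hz]; [congruence|]. destruct (g7 z w Hw).
      rewrite upd_neq in * by congruence. eapply HI; eauto.
  - auto.
Qed.

Lemma locally_solved_init y s z : wf_state s -> ~ sdom s y -> sdom s z -> locally_solved s z -> locally_solved (init rho0 y s) z.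
Proof. intros HG Hy Hz H. pose proof HG as [g1 [g2 [g3 [g4 [g5 [g6 g7]]]]]].
  apply locally_solved_transport with (s := s); auto.
  - intros d Hd Hzd. simpl. rewrite !upd_neq by congruence. auto.
  - simpl. apply upd_neq. congruence.
Qed.

Lemma solve_pre_init x E y s : wf_state s -> pending_inv (x :: E) s -> sdom s x ->
  (forall e, In e E -> sdom s e) -> ~ sdom s y ->
  solve_pre y (x :: E) (skey (init rho0 y s) y) (init rho0 y s).
Proof. intros HG [i1 i2] Hx HE Hy. pose proof HG as [g1 [g2 [g3 [g4 [g5 [g6 g7]]]]]].
  rewrite key_init. unfold solve_pre. refine (conj _ (conj _ (conj _ (conj _ (conj _ (conj _ (conj _ (conj _ _)))))))).
  - apply wf_init; auto.
  - split; simpl.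
    + intros z [->|Hz] Hs; [right; left; auto|]. destruct (i1 z Hz Hs); simpl; auto.
    + intros z [->|Hz] Hs HE'; [exfalso; apply Hy; auto|]. apply locally_solved_init; auto; apply i2; simpl in *; tauto.
  - simpl; auto.
  - simpl. intro; auto.
  - simpl. intro; auto.
  - intros e He. simpl. assert (sdom s e) by (destruct He as [<-|He]; auto).
    split; auto. rewrite upd_eq, upd_neq by congruence. specialize (g5 e H). lia.
  - rewrite key_init. lia.
  - intros z w Hz Hkz Hw. simpl in *. unfold upd in *. destruct (dec (z = y)); subst.
    + destruct Hw as [<-|[]]. match goal with |- context [dec ?a] => destruct (dec a) end; [lia|congruence].
    + destruct Hz as [->|Hz]; [congruence|]. specialize (g5 z Hz). destruct (dec (y = y)); [|congruence]. lia.
  - intros z Hz Hk. simpl in *. rewrite upd_eq in Hk. destruct Hz as [->|Hz].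
    rewrite upd_eq in Hk; lia. rewrite upd_neq in Hk by congruence. specialize (g5 z Hz). lia.
Qed.

Definition eval_inv (x : X) (E : list X) (K : Z) (s1 : state) (t : tree X D) (sE : state) : Prop :=
  wf_state sE /\ pending_inv (x :: E) sE /\ sdom sE x /\ sstable sE x /\ infl_closed K sE /\ (skey sE x <= K)%Z /\
  (forall e, In e E -> sdom sE e /\ (skey sE x < skey sE e)%Z) /\ infl_path sE x (f x) t /\
  evolves (skey s1 x) K s1 sE /\ (forall q, In q (sQ sE) -> In q (sQ s1)) /\ srho sE x = srho s1 x /\
  (meta_trace s1 sE \/ progress_trace s1 sE) /\ sdom s1 x.

Lemma evolves_mark_stable x K s : evolves (skey s x) K s (mark_stable x s).
Proof. evo_split; simpl; auto.
  - intros z Hz Hk [Hs|Hs]; auto.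
  - intros z Hz Hk [->|Hs]; [lia|]. split; auto.
Qed.

Lemma wf_mark_stable x s : wf_state s -> sdom s x -> ~ In x (sQ s) -> wf_state (mark_stable x s).
Proof. intros HG Hx HnQ. pose proof HG as [g1 [g2 [g3 [g4 [g5 [g6 g7]]]]]].
  unfold wf_state; simpl. refine (conj _ (conj _ (conj _ (conj _ (conj _ (conj _ _)))))); auto.
    + intros z [->|Hz]; auto.
    + intros z Hz [->|Hz']; [contradiction|]. eapply g3; eauto.
Qed.

Lemma eval_inv_start x E K s : solve_pre x E K s -> eval_inv x E K (mark_stable x s) (f x) (mark_stable x s).
Proof.
  intros [HG [[i1 i2] [Hx [Hns [HnQ [HE [HK [HIC HN]]]]]]]].
  pose proof HG as [g1 [g2 [g3 [g4 [g5 [g6 g7]]]]]].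
  unfold eval_inv. refine (conj _ (conj _ (conj _ (conj _ (conj _ (conj _ (conj _ (conj _ (conj _ (conj _ (conj _ (conj _ _)))))))))))).
  - unfold wf_state; simpl. refine (conj _ (conj _ (conj _ (conj _ (conj _ (conj _ _)))))); auto.
    + intros z [->|Hz]; auto.
    + intros z Hz [->|Hz']; [contradiction|]. eapply g3; eauto.
  - split; simpl.
    + intros z Hz Hs. apply i1; auto.
    + intros z Hz [->|Hs] HnE; [exfalso; apply HnE; left; auto|]. apply (i2 z Hz Hs HnE).
  - exact Hx.
  - simpl; auto.
  - exact HIC.
  - exact HK.
  - exact HE.
  - apply ipath_nil.
  - apply evolves_refl.
  - auto.
  - auto.
  - left; apply rt_refl.
  - exact Hx.
Qed.

Lemma eval_inv_query_old x E K s1 y k sE : eval_inv x E K s1 (Query y k) sE -> sdom sE y ->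
  eval_inv x E K s1 (k (srho sE y)) (add_infl x y sE).
Proof.
  intros [HG [HI [Hx [Hs [HIC [HK [HE [HP [HEvo [HQ [Hr [HH Hx1]]]]]]]]]]]] Hy.
  unfold eval_inv. refine (conj _ (conj _ (conj _ (conj _ (conj _ (conj _ (conj _ (conj _ (conj _ (conj _ (conj _ (conj _ _)))))))))))).
  - apply wf_add_infl; auto.
  - apply pending_add_infl; auto.
  - exact Hx.
  - exact Hs.
  - destruct (@evolves_add_infl (skey sE x) K x y sE HG Hx HK) as [_ [_ [_ [_ [_ [_ [HG7 _]]]]]]].
    apply HG7; auto. lia.
  - exact HK.
  - exact HE.
  - change (srho sE y) with (srho (add_infl x y sE) y). apply infl_path_snoc.
    + apply infl_path_transport with (s := sE); auto. intros d Hd Hxd. simpl. repeat split; auto.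
      unfold upd. destruct (dec (d = y)); subst; simpl; auto.
    + exact Hy.
    + simpl. rewrite upd_eq. left; auto.
  - apply (@evolves_trans (skey s1 x) K (skey s1 x) K s1 sE); [exact HG|exact HEvo|apply evolves_add_infl; auto|lia|lia].
  - exact HQ.
  - exact Hr.
  - destruct HH as [HH|HH]; [left|right].
    + eapply rt_trans; [exact HH|]. apply rt_step. split; [intros; reflexivity|split; auto].
    + eapply progress_trace_r; [exact HH|]. apply step_meta_trace. split; [intros; reflexivity|split; auto].
  - exact Hx1.
Qed.

Lemma step_meta_add_infl x y s : step_meta s (add_infl x y s).
Proof. split; [intros; reflexivity|split; auto]. Qed.

Lemma solve_post_trace y E K s s' : solve_post y E K s s' -> trace s s'.
Proof. intros [_ [_ [_ [_ [[H _]|H]]]]]. apply meta_trace_trace; auto. apply progress_trace_trace; auto. Qed.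

Lemma infl_path_init x y s t0 t : ~ sdom s y -> infl_path s x t0 t -> infl_path (init rho0 y s) x t0 t.
Proof.
  intros Hy HP. apply infl_path_transport with (s := s); auto.
  intros d Hd Hxd. assert (d <> y) by congruence. simpl. rewrite !upd_neq by auto. auto.
Qed.

Lemma infl_path_evolves kx K s s' x t0 t : evolves kx K s s' -> sdom s x -> (kx < skey s x)%Z ->
  sstable s' x -> infl_path s x t0 t -> infl_path s' x t0 t.
Proof.
  intros [Hdom [_ [_ [_ [Hst _]]]]] Hx Hkx Hs' HP. apply infl_path_transport with (s := s); auto.
  intros d Hd Hxd. destruct (proj2 (Hst x Hx Hkx Hs') d Hxd). auto.
Qed.

Lemma eval_inv_fresh_call x E K s1 y k sE s' : eval_inv x E K s1 (Query y k) sE -> ~ sdom sE y ->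
  solve_post y (x :: E) (skey (init rho0 y sE) y) (init rho0 y sE) s' ->
  eval_inv x E K s1 (Query y k) s'.
Proof.
  intros [HG [HI [Hx [Hs [HIC [HK [HE [HP [HEvo [HQ [Hr [HH Hx1]]]]]]]]]]]] Hy Hpost.
  pose proof HG as [_ [g2 [_ [_ [g5 _]]]]].
  pose proof Hpost as [HG' [HI' [HEvo' [HQ' _]]]].
  set (si := init rho0 y sE) in *.
  assert (HKy : skey si y = (- scount sE)%Z) by apply key_init.
  assert (Hkeyold : forall z, sdom sE z -> skey si z = skey sE z).
  { intros z Hz. simpl. apply upd_neq. congruence. }
  assert (HEi : evolves (skey s1 x) K sE si) by (apply evolves_init; auto; specialize (g5 x Hx); lia).
  pose proof HEvo' as [a' [b' [c' [_ [_ [f' [g' h']]]]]]].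
  assert (Hxi : sdom si x) by (simpl; auto).
  assert (Hkx : (skey si y < skey si x)%Z) by (rewrite HKy, Hkeyold by auto; specialize (g5 x Hx); lia).
  assert (Hsx' : sstable s' x) by (apply f'; simpl; auto).
  assert (Hkx' : skey s' x = skey sE x) by (rewrite b', Hkeyold; auto).
  unfold eval_inv. refine (conj HG' (conj HI' (conj (a' x Hxi) (conj Hsx' (conj _ (conj _ (conj _ (conj _ (conj _ (conj _ (conj _ (conj _ Hx1)))))))))))).
  - apply g'; [rewrite HKy; specialize (g5 x Hx); lia|].
    destruct HEi as [_ [_ [_ [_ [_ [_ [HGi7 _]]]]]]]. apply HGi7; auto. lia.
  - lia.
  - intros e He. destruct (HE e He) as [He1 He2]. split; [apply a'; simpl; auto|].
    rewrite Hkx', b', Hkeyold by (simpl; auto). lia.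
  - apply (infl_path_evolves HEvo' Hxi Hkx Hsx'), infl_path_init; auto.
  - assert (Hk1 : skey s1 x = skey sE x) by (destruct HEvo as [_ [b1 _]]; rewrite b1; auto).
    apply (@evolves_trans (skey s1 x) K (skey si y) (skey si y) s1 si).
    + apply wf_init; auto.
    + apply (@evolves_trans (skey s1 x) K (skey s1 x) K s1 sE); auto; lia.
    + exact HEvo'.
    + rewrite HKy, Hk1. specialize (g5 x Hx). lia.
    + rewrite HKy. specialize (g5 x Hx). lia.
  - intros q Hq. apply HQ. destruct (h' q Hq) as [Hq'|Hq']; [exact Hq'|exfalso].
    assert (Hlater : forall q, In q (sQ si) -> (skey si y < skey si q)%Z).
    { intros q0 Hq0. simpl in Hq0. rewrite HKy, Hkeyold by auto. specialize (g5 q0 (g2 q0 Hq0)). lia. }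
    specialize (HQ' Hlater q Hq). lia.
  - rewrite c' by (simpl; auto). simpl. rewrite upd_neq by congruence. auto.
  - right. exists sE, si. split; [destruct HH; [apply meta_trace_trace|apply progress_trace_trace]; auto|].
    split; [left; exists y; auto|]. apply (solve_post_trace Hpost).
Qed.

Lemma eval_inv_query_new x E K s1 y k sE s' : eval_inv x E K s1 (Query y k) sE -> ~ sdom sE y ->
  solve_post y (x :: E) (skey (init rho0 y sE) y) (init rho0 y sE) s' ->
  eval_inv x E K s1 (k (srho s' y)) (add_infl x y s').
Proof.
  intros HEv Hy Hpost. apply eval_inv_query_old; [exact (eval_inv_fresh_call HEv Hy Hpost)|].
  destruct Hpost as [_ [_ [[Hdom _] _]]]. apply Hdom. simpl; auto.
Qed.
Lemma wf_set_value x s2 tmp : wf_state s2 -> sdom s2 x -> wf_state (set_value x s2 tmp).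
Proof. intros [g1 [g2 [g3 [g4 [g5 [g6 g7]]]]]] Hx. unfold wf_state; simpl.
  refine (conj _ (conj _ (conj _ (conj _ (conj _ (conj _ _)))))); auto.
  - intros z [Hz _]; auto.
  - intros z Hz. rewrite In_fold_addQ, In_addQ in Hz. destruct Hz as [[Hz| ->]|Hz]; auto. destruct (g7 x z Hz); auto.
  - intros z Hz [Hs HW]. rewrite In_fold_addQ, In_addQ in Hz. destruct Hz as [[Hz|Hz]|Hz]; [eapply g3; eauto| |]; apply HW; simpl; auto.
  - intros z w Hw. unfold upd in Hw. destruct (dec (z = x)); [destruct Hw|]. auto.
Qed.

Lemma pending_set_value x E s2 tmp : wf_state s2 -> pending_inv (x :: E) s2 -> pending_inv E (set_value x s2 tmp).
Proof. intros HG [i1 i2]. pose proof HG as [g1 [g2 [g3 [g4 [g5 [g6 g7]]]]]]. split; simpl.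
  - intros z Hz Hns. rewrite In_fold_addQ, In_addQ.
    destruct (dec (In z (x :: sinfl s2 x))) as [HW|HW]; [simpl in HW; destruct HW as [<-|HW]; tauto|].
    assert (~ sstable s2 z) by tauto. destruct (i1 z Hz H) as [Hq|[Hq|Hq]]; auto.
  - intros z Hz [Hs HW] HE. assert (Hzx : z <> x) by (intro; apply HW; left; auto).
    assert (Hc : locally_solved s2 z) by (apply i2; auto; intros [Hq|Hq]; auto).
    apply locally_solved_transport with (s := s2); auto.
    + intros d Hd Hzd. assert (d <> x) by (intro; subst; apply HW; right; auto).
      simpl. repeat split; auto; rewrite upd_neq; auto.
    + apply upd_neq; auto.
Qed.

Lemma evolves_set_value x K s2 tmp : wf_state s2 -> sdom s2 x -> infl_closed K s2 -> (skey s2 x <= K)%Z ->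
  evolves (skey s2 x) K s2 (set_value x s2 tmp).
Proof. intros HG Hx HIC HK. pose proof HG as [g1 [g2 [g3 [g4 [g5 [g6 g7]]]]]]. evo_split; simpl.
  - auto.
  - auto.
  - intros z Hz Hk. apply upd_neq. intro; subst; lia.
  - intros z Hz Hk Hs. rewrite In_fold_addQ, In_addQ.
    destruct (dec (In z (x :: sinfl s2 x))) as [HW|HW]; [simpl in HW; destruct HW as [<-|HW]; tauto|]. destruct Hs; auto.
  - intros z Hz Hk [Hs HW]. split; auto. intros d Hd.
    assert (d <> x) by (intro; subst; apply HW; right; auto).
    rewrite !upd_neq; auto.
  - intros z Hz Hk Hs. split; auto. intros [->|HW]; [lia|].
    specialize (HIC x z Hx HK HW). lia.
  - intros K2 HK2 HI z w Hz Hkz Hw. simpl in *. unfold upd in Hw. destruct (dec (z = x)); [destruct Hw|].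
    eapply HI; eauto.
  - intros q Hq. rewrite In_fold_addQ, In_addQ in Hq. destruct Hq as [[Hq| ->]|Hq]; auto.
    right. eapply HIC; eauto.
Qed.

Lemma infl_closed_set_value K x s2 tmp : infl_closed K s2 -> infl_closed K (set_value x s2 tmp).
Proof. intros HI z w Hz Hkz Hw. simpl in *. unfold upd in Hw. destruct (dec (z = x)); [destruct Hw|].
  eapply HI; eauto. Qed.

Lemma solve_pre_queue_later x E K s : solve_pre x E K s -> forall q, In q (sQ s) -> (skey s x < skey s q)%Z.
Proof. intros [HG [HI [Hx [Hns [HnQ [HE [HK [HIC HN]]]]]]]] q Hq.
  pose proof HG as [g1 [g2 [g3 [g4 [g5 [g6 g7]]]]]].
  destruct (Z.lt_total (skey s x) (skey s q)) as [H|[H|H]]; auto.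
  - exfalso. assert (q = x) by (apply g6; auto). subst; contradiction.
  - exfalso. destruct (HN q (g2 q Hq) H). eapply g3; eauto.
Qed.

Lemma solved_before_of_pending x E s2 : wf_state s2 -> pending_inv (x :: E) s2 -> (forall e, In e E -> (skey s2 x < skey s2 e)%Z) ->
  (forall q, In q (sQ s2) -> (skey s2 x < skey s2 q)%Z) -> solved_before x s2.
Proof. intros HG [i1 i2] HE HQ y Hy Hk.
  assert (HyE : ~ In y (x :: E)).
  { intros [->|Hin]; [lia|]. specialize (HE y Hin). lia. }
  assert (Hs : sstable s2 y).
  { destruct (dec (sstable s2 y)) as [H|H]; auto. destruct (i1 y Hy H) as [Hq|Hq]; [|contradiction].
    specialize (HQ y Hq). lia. }
  split; auto.
Qed.

Lemma solve_post_unchanged x E K s v s2 : solve_pre x E K s -> eval_inv x E K (mark_stable x s) (Return v) s2 ->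
  box (srho s x) v = srho s2 x -> solve_post x E K s s2.
Proof.
  intros Hpre HEv Heq. pose proof (solve_pre_queue_later Hpre) as HNQ.
  destruct Hpre as [HG0 [HI0 [Hx0 [Hns0 [HnQ0 [HE0 [HK0 [HIC0 HN0]]]]]]]].
  destruct HEv as [HG [[i1 i2] [Hx [Hs [HIC [HK [HE [HP [HEvo [HQ [Hr [HH Hx1]]]]]]]]]]]].
  destruct (infl_path_return HP) as [Hv Hdep].
  pose proof HEvo as [a1 [b1 _]]. simpl in b1.
  unfold solve_post. refine (conj HG (conj _ (conj _ (conj _ _)))).
  - split.
    + intros z Hz Hnz. destruct (i1 z Hz Hnz) as [Hq|[Hq|Hq]]; auto. subst; contradiction.
    + intros z Hz Hsz HnE. destruct (dec (z = x)) as [->|Hzx].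
      * split; auto. rewrite Hv. simpl in Hr. rewrite Hr at 2. congruence.
      * apply i2; auto. intros [Hq|Hq]; auto.
  - apply (@evolves_trans (skey s x) K (skey s x) K s (mark_stable x s)); [apply wf_mark_stable; auto|apply evolves_mark_stable|exact HEvo|lia|lia].
  - intros Hpq q Hq. simpl in HQ. specialize (HQ q Hq). specialize (Hpq q HQ).
    rewrite b1; auto. simpl. destruct HG0 as [_ [g2 _]]. auto.
  - destruct HH as [HH|HH].
    + left. split.
      * eapply rt_trans; [apply rt_step|exact HH]. split; [intros; reflexivity|split; auto].
      * intros q Hq. specialize (HQ q Hq). simpl in HQ. split; auto. intro; subst; contradiction.
    + right. eapply progress_trace_l; [|exact HH]. apply step_meta_trace. split; [intros; reflexivity|split; auto].
Qed.

Lemma solve_post_changed x E K s v s2 : solve_pre x E K s -> eval_inv x E K (mark_stable x s) (Return v) s2 ->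
  box (srho s x) v <> srho s2 x ->
  loop_pre x E K (set_value x s2 (box (srho s x) v)) /\
  step_update s2 (set_value x s2 (box (srho s x) v)) /\ trace s s2 /\
  (forall s', loop_post x E K (set_value x s2 (box (srho s x) v)) s' -> solve_post x E K s s').
Proof.
  intros Hpre HEv Hne. pose proof (solve_pre_queue_later Hpre) as HNQ.
  destruct Hpre as [HG0 [HI0 [Hx0 [Hns0 [HnQ0 [HE0 [HK0 [HIC0 HN0]]]]]]]].
  destruct HEv as [HG [HI [Hx [Hs [HIC [HK [HE [HP [HEvo [HQ [Hr [HH Hx1]]]]]]]]]]]].
  destruct (infl_path_return HP) as [Hv Hdep].
  pose proof HEvo as [a1 [b1 _]]. simpl in b1, Hr, HQ.
  pose proof HG0 as [g1 [g2 [g3 [g4 [g5 [g6 g7]]]]]].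
  set (tmp := box (srho s x) v).
  assert (Hkx : skey s2 x = skey s x) by auto.
  assert (HHs : trace s s2).
  { apply rt_trans with (y := mark_stable x s); [apply step_meta_trace; split; [simpl; tauto|split; auto]|].
    destruct HH; [apply meta_trace_trace|apply progress_trace_trace]; auto. }
  assert (Hupd : step_update s2 (set_value x s2 tmp)).
  { exists x. refine (conj Hx (conj _ (conj HG (conj _ (conj _ (conj _ _)))))).
    - apply solved_before_of_pending with (E := E); auto.
      + intros e He. apply HE; auto.
      + intros q Hq. specialize (HQ q Hq). rewrite (b1 x), (b1 q) by auto. apply HNQ; auto.
    - rewrite Hv, Hr. rewrite <- Hr at 2. exact Hne.
    - simpl. tauto.
    - simpl. auto.
    - intros z. simpl. rewrite Hv, Hr. reflexivity. }
  refine (conj _ (conj Hupd (conj HHs _))).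
  - unfold loop_pre. refine (conj _ (conj _ (conj _ (conj _ (conj _ _))))).
    + apply wf_set_value; auto.
    + apply pending_set_value; auto.
    + exact Hx.
    + exact HE.
    + exact HK.
    + apply infl_closed_set_value; auto.
  - intros s' [HG' [HI' [HEvo' [HP4 HHist]]]].
    unfold solve_post. refine (conj HG' (conj HI' (conj _ (conj _ _)))).
    + apply (@evolves_trans (skey s x) K (skey s x) K s s2); auto; [| |lia|lia].
      * apply (@evolves_trans (skey s x) K (skey s x) K s (mark_stable x s)); [apply wf_mark_stable; auto|apply evolves_mark_stable|exact HEvo|lia|lia].
      * apply (@evolves_trans (skey s x) K (skey s2 x) K s2 (set_value x s2 tmp)); [apply wf_set_value; auto| |exact HEvo'|lia|lia].
        rewrite <- Hkx. apply evolves_set_value; auto.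
    + intros _ q Hq. specialize (HP4 q Hq). simpl in HP4. lia.
    + right. exists s2, (set_value x s2 tmp). exact (conj HHs (conj (or_intror Hupd) HHist)).
Qed.

Lemma wf_pop_queue y s : wf_state s -> wf_state (pop_queue y s).
Proof using.
  intros [g1 [g2 [g3 [g4 [g5 [g6 g7]]]]]]. unfold wf_state; simpl.
  refine (conj g1 (conj _ (conj _ (conj g4 (conj g5 (conj g6 g7)))))).
  - intros z Hz. apply In_removeQ in Hz as [Hz _]. apply g2, Hz.
  - intros z Hz. apply In_removeQ in Hz as [Hz _]. apply g3, Hz.
Qed.

Lemma evolves_pop_queue kx K s y : (skey s y <= kx)%Z -> evolves kx K s (pop_queue y s).
Proof.
  intros Hy. evo_split; simpl; auto.
  - intros z Hz Hk [Hs|Hs]; auto. right. apply In_removeQ. split; auto. intros ->; lia.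
  - intros q Hq. apply In_removeQ in Hq. tauto.
Qed.

Lemma solve_pre_pop x E K s y : loop_pre x E K s -> minQ (skey s) (sQ s) = Some y ->
  (skey s y <= skey s x)%Z -> solve_pre y E K (pop_queue y s).
Proof using.
  intros [HG [[i1 i2] [Hx [HE [HK HIC]]]]] Hm Hle.
  pose proof HG as [g1 [g2 [g3 [g4 [g5 [g6 g7]]]]]].
  destruct (minQ_some _ _ Hm) as [HyQ Hmin].
  unfold solve_pre; simpl. refine (conj _ (conj _ (conj _ (conj _ (conj _ (conj _ (conj _ (conj _ _)))))))).
  - apply wf_pop_queue, HG.
  - split; simpl.
    + intros z Hz Hns. destruct (dec (z = y)) as [->|Hzy]; [right; left; auto|].
      rewrite In_removeQ. destruct (i1 z Hz Hns); [left; split; auto|right; right; auto].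
    + intros z Hz Hs' HnE. apply i2; auto; intro; apply HnE; right; auto.
  - auto.
  - apply g3; auto.
  - rewrite In_removeQ. intros [_ C]. apply C; reflexivity.
  - intros e He. destruct (HE e He); split; auto. lia.
  - lia.
  - exact HIC.
  - intros z Hz Hk. simpl in Hk.
    assert (HzQ : ~ In z (sQ s)) by (intro Hq; specialize (Hmin z Hq); lia).
    assert (HzE : ~ In z E) by (intro He; destruct (HE z He); lia).
    assert (Hs' : sstable s z).
    { destruct (dec (sstable s z)) as [H|H]; auto. destruct (i1 z Hz H); contradiction. }
    split; auto. apply i2; auto.
Qed.

Lemma loop_pre_after_pop x E K s y s'' : loop_pre x E K s -> (skey s y <= skey s x)%Z ->
  solve_post y E K (pop_queue y s) s'' -> loop_pre x E K s''.
Proof.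
  intros [HG [[i1 i2] [Hx [HE [HK HIC]]]]] Hle [HG' [HI' [HEvo' _]]].
  pose proof HEvo' as [a' [b' [_ [_ [_ [_ [g' _]]]]]]]. simpl in a', b'.
  unfold loop_pre. refine (conj HG' (conj HI' (conj _ (conj _ (conj _ _))))).
  - auto.
  - intros e He. destruct (HE e He). split; auto. rewrite !b'; auto.
  - rewrite b'; auto.
  - apply g'; [lia|exact HIC].
Qed.

Lemma loop_post_after_pop x E K s y s'' s' : loop_pre x E K s -> (skey s y <= skey s x)%Z ->
  solve_post y E K (pop_queue y s) s'' -> loop_post x E K s'' s' -> loop_post x E K s s'.
Proof.
  intros Hpre Hle Hpost [HG2 [HI2 [HEvo2 [HQ2 HH2]]]].
  pose proof Hpre as [HG [_ [Hx [_ [HK _]]]]].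
  pose proof Hpost as [HG' [_ [HEvo' _]]].
  pose proof HEvo' as [a' [b' _]]. simpl in a', b'.
  unfold loop_post. refine (conj HG2 (conj HI2 (conj _ (conj _ _)))).
  - apply (@evolves_trans (skey s x) K (skey s x) K s s''); auto; [| |lia|lia].
    + apply (@evolves_trans (skey s x) K (skey s y) K s (pop_queue y s));
        [apply wf_pop_queue; auto|apply evolves_pop_queue; lia|exact HEvo'|lia|lia].
    + rewrite b' in HEvo2; auto.
  - intros q Hq. specialize (HQ2 q Hq). rewrite b' in HQ2; auto.
  - eapply rt_trans; [|exact HH2]. eapply rt_trans; [|exact (solve_post_trace Hpost)].
    apply step_meta_trace. split; [intros; reflexivity|split; auto].
Qed.

Lemma loop_post_refl x E K s : loop_pre x E K s ->
  (forall q, In q (sQ s) -> (skey s x < skey s q)%Z) -> loop_post x E K s s.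
Proof.
  intros [HG [HI _]] HQ.
  exact (conj HG (conj HI (conj (evolves_refl _ _ _) (conj HQ (rt_refl _ _ _))))).
Qed.

Lemma eval_rhs_sound n x E K s1 :
  (forall y E' K' s s', solve_pre y E' K' s -> solve box f rho0 n y s = Done s' tt -> solve_post y E' K' s s') ->
  forall t sE s2 v, eval_inv x E K s1 t sE -> eval_rhs (solve box f rho0 n) x t sE = Done s2 v ->
  eval_inv x E K s1 (Return v) s2.
Proof.
  intros IH t. induction t as [d|y k IHt]; intros sE s2 v HI Hev; simpl in Hev.
  - inversion Hev; subst; auto.
  - destruct (dec (sdom sE y)) as [Hy|Hy].
    + eapply IHt; [|exact Hev]. apply eval_inv_query_old; auto.
    + destruct (solve box f rho0 n y (init rho0 y sE)) as [s' []|s'] eqn:Hs; [|discriminate].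
      eapply IHt; [|exact Hev]. simpl. apply eval_inv_query_new with (sE := sE); auto.
      apply IH; auto.
      destruct HI as [HG [HI [Hx [_ [_ [_ [HE _]]]]]]].
      apply solve_pre_init; auto. intros e He; apply HE; auto.
Qed.

Lemma solve_loop_sound : forall n,
  (forall x E K s s', solve_pre x E K s -> solve box f rho0 n x s = Done s' tt -> solve_post x E K s s') /\
  (forall x E K s s', loop_pre x E K s -> loop box f rho0 n x s = Done s' tt -> loop_post x E K s s').
Proof.
  induction n as [|n IH]; [split; intros; discriminate|].
  destruct IH as [IHs IHl]. split.
  - intros x E K s s' Hpre Hrun. rewrite solve_unfold in Hrun.
    destruct (dec (sstable s x)) as [Hsx|Hsx].
    + exfalso. destruct Hpre as [_ [_ [_ [H _]]]]. contradiction.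
    + destruct (eval_rhs (solve box f rho0 n) x (f x) (mark_stable x s)) as [s2 v|s2] eqn:Hev; [|discriminate].
      cbn [bindR] in Hrun.
      pose proof (@eval_rhs_sound n x E K (mark_stable x s) IHs (f x) (mark_stable x s) s2 v (eval_inv_start Hpre) Hev) as HEv.
      destruct (dec (box (srho s x) v = srho s2 x)) as [Heq|Hne].
      * inversion Hrun; subst. eapply solve_post_unchanged; eauto.
      * destruct (solve_post_changed Hpre HEv Hne) as [HpreL [_ [_ Hfin]]].
        apply Hfin. eapply IHl; eauto.
  - intros x E K s s' Hpre Hrun. rewrite loop_unfold in Hrun.
    destruct (minQ (skey s) (sQ s)) as [y|] eqn:Hm.
    + destruct (minQ_some _ _ Hm) as [_ Hmin].
      destruct (Z.leb (skey s y) (skey s x)) eqn:Hle.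
      * apply Z.leb_le in Hle.
        destruct (solve box f rho0 n y (pop_queue y s)) as [s'' []|s''] eqn:Hs; [|discriminate].
        assert (Hpost := IHs _ _ _ _ _ (solve_pre_pop Hpre Hm Hle) Hs).
        apply (loop_post_after_pop Hpre Hle Hpost).
        exact (IHl _ _ _ _ _ (loop_pre_after_pop Hpre Hle Hpost) Hrun).
      * apply Z.leb_gt in Hle. inversion Hrun; subst.
        apply loop_post_refl; auto. intros q Hq. specialize (Hmin q Hq). lia.
    + apply minQ_none in Hm. inversion Hrun; subst.
      apply loop_post_refl; auto. intros q Hq. rewrite Hm in Hq. destruct Hq.
Qed.

Lemma solve_pre_run x0 : solve_pre x0 [] 0%Z (init rho0 x0 (empty_state rho0)).
Proof.
  assert (HG0 : wf_state (empty_state rho0)).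
  { unfold wf_state; simpl. refine (conj _ (conj _ (conj _ (conj _ (conj _ (conj _ _)))))); try tauto; try lia.
    }
  assert (HG : wf_state (init rho0 x0 (empty_state rho0))) by (apply wf_init; auto).
  assert (Hk : skey (init rho0 x0 (empty_state rho0)) x0 = 0%Z) by (simpl; rewrite upd_eq; reflexivity).
  unfold solve_pre. refine (conj HG (conj _ (conj _ (conj _ (conj _ (conj _ (conj _ (conj _ _)))))))).
  - split; simpl.
    + intros z [->|[]] _. right; left; auto.
    + intros z _ [].
  - simpl; auto.
  - simpl; auto.
  - simpl; auto.
  - intros e [].
  - rewrite Hk; lia.
  - intros z w [->|[]] _ Hw. simpl in Hw. rewrite upd_eq in Hw. destruct Hw as [<-|[]]. rewrite Hk; lia.
  - intros z [->|[]] Hz. lia.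
Qed.

Lemma run_sound x0 n s : run box f rho0 x0 n = Done s tt ->
  partial_box_solution box f (sdom s) (srho s) /\ sdom s x0.
Proof.
  intros Hrun. unfold run in Hrun.
  destruct (proj1 (solve_loop_sound n) _ _ _ _ _ (solve_pre_run x0) Hrun) as [HG [[i1 i2] [HEvo [HP4 _]]]].
  assert (Hk : skey (init rho0 x0 (empty_state rho0)) x0 = 0%Z) by (simpl; rewrite upd_eq; reflexivity).
  rewrite Hk in HP4. specialize (HP4 (fun q Hq => match Hq with end)).
  pose proof HG as [g1 [g2 [g3 [g4 [g5 [g6 g7]]]]]].
  split.
  - intros z Hz. assert (Hs : sstable s z).
    { destruct (dec (sstable s z)) as [H|H]; auto. destruct (i1 z Hz H) as [Hq|[]].
      specialize (HP4 z Hq). specialize (g5 z Hz). lia. }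
    destruct (i2 z Hz Hs (fun H => H)) as [A B]. split; auto. intros y Hy; apply A; auto.
  - destruct HEvo as [a _]. apply a. simpl; auto.
Qed.
End Run.

Section NoInfiniteChain.
Variables (A B : Type) (P : A -> A -> B -> Prop).
Definition descends (a' a : A) : Prop := exists c, P a' a c.

Lemma not_Acc_descends a : ~ Acc descends a -> exists p : A * B, P (fst p) a (snd p) /\ ~ Acc descends (fst p).
Proof. intros H. apply NNPP. intros H2. apply H. constructor. intros a' [c Hc].
  apply NNPP. intros H3. apply H2. exists (a', c). simpl. auto. Qed.

Lemma Acc_of_no_infinite_chain : ~ (exists (a : nat -> A) (b : nat -> B), forall i, P (a (S i)) (a i) (b i)) ->
  forall a, Acc descends a.
Proof.
  intros Hno a0. apply NNPP. intros H0.
  assert (step : forall a : {a : A | ~ Acc descends a}, {p : A * B | P (fst p) (proj1_sig a) (snd p) /\ ~ Acc descends (fst p)}).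
  { intros [a Ha]. apply constructive_indefinite_description. apply not_Acc_descends; auto. }
  set (nxt := fun a : {a : A | ~ Acc descends a} =>
        exist (fun a => ~ Acc descends a) (fst (proj1_sig (step a))) (proj2 (proj2_sig (step a)))).
  set (sq := fix sq (n : nat) : {a : A | ~ Acc descends a} :=
               match n with O => exist _ a0 H0 | S n => nxt (sq n) end).
  apply Hno. exists (fun n => proj1_sig (sq n)), (fun n => snd (proj1_sig (step (sq n)))).
  intros i. simpl. exact (proj1 (proj2_sig (step (sq i)))).
Qed.
End NoInfiniteChain.

Section Lexicographic.
Variables (I A : Type) (R : A -> A -> Prop) (key : I -> Z).
Hypothesis wfR : well_founded R.

Definition lex_on (S : list I) (c' c : I -> A) : Prop :=
  exists z0, In z0 S /\ R (c' z0) (c z0) /\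
    forall w, In w S -> (key z0 < key w)%Z -> c' w = c w \/ R (c' w) (c w).

Lemma exists_max_key (S : list I) : S <> [] -> exists m, In m S /\ forall w, In w S -> (key w <= key m)%Z.
Proof. induction S as [|a S IH]; intros H; [congruence|].
  destruct S as [|b S'].
  - exists a. split; [left; auto|]. intros w [<-|[]]; lia.
  - destruct IH as [m [Hm Hmax]]; [discriminate|].
    destruct (Z.le_gt_cases (key a) (key m)).
    + exists m. split; [right; auto|]. intros w [<-|Hw]; auto.
    + exists a. split; [left; auto|]. intros w [<-|Hw]; [lia|]. specialize (Hmax w Hw). lia.
Qed.

Lemma Acc_lex_on : forall n (S : list I), length S <= n ->
  (forall z w, In z S -> In w S -> key z = key w -> z = w) -> forall c, Acc (lex_on S) c.
Proof.
  induction n as [|n IHn]; intros S Hlen Hinj c.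
  - destruct S; [|simpl in Hlen; lia]. constructor. intros c' [z0 [[] _]].
  - destruct S as [|a S0] eqn:HS.
    + constructor. intros c' [z0 [[] _]].
    + rewrite <- HS in *. destruct (@exists_max_key S ltac:(subst; discriminate)) as [m [Hm Hmax]].
      set (S' := remove (fun a b => dec (a = b)) m S).
      assert (HS'in : forall z, In z S' <-> In z S /\ z <> m).
      { intros z. split; [apply in_remove|intros [Hz Hzm]; apply in_in_remove; auto]. }
      assert (HlenS' : length S' < length S) by apply remove_length_lt, Hm.
      assert (IH' : forall c, Acc (lex_on S') c).
      { apply IHn; [lia|]. intros z w Hz Hw; apply Hinj; apply HS'in; auto. }
      assert (Main : forall a0, Acc R a0 -> forall c, Acc (lex_on S') c -> c m = a0 -> Acc (lex_on S) c).
      { intros a0 Ha. induction Ha as [a0 Ha IHa]. intros c0 Hc. induction Hc as [c0 Hc IHc].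
        intros Hcm. constructor. intros c' [z0 [Hz0 [HR Hold]]].
        destruct (dec (z0 = m)) as [->|Hne].
        - apply (IHa (c' m)); auto. rewrite <- Hcm; auto.
        - assert (Hk : (key z0 < key m)%Z).
          { specialize (Hmax z0 Hz0). destruct (Z.eq_dec (key z0) (key m)); [|lia].
            exfalso. apply Hne. apply Hinj; auto. }
          destruct (Hold m Hm Hk) as [Heq|HRm].
          + apply IHc; [|congruence]. exists z0. split; [apply HS'in; auto|]. split; auto.
            intros w Hw Hkw. apply Hold; auto. apply HS'in; auto.
          + apply (IHa (c' m)); auto. rewrite <- Hcm; auto. }
      apply (Main (c m)); auto.
Qed.
End Lexicographic.

Section Count.
Variable (X : Type).
Definition count_on (P : X -> Prop) (L : list X) : nat :=
  length (filter (fun z => if dec (P z) then true else false) L).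

Lemma count_on_ext (P Q : X -> Prop) L : (forall z, P z <-> Q z) -> count_on P L = count_on Q L.
Proof. intros H. unfold count_on. induction L as [|a L IH]; simpl; auto.
  destruct (dec (P a)), (dec (Q a)); simpl; try rewrite IH; auto; exfalso; firstorder. Qed.

Lemma count_on_mono (P Q : X -> Prop) L : (forall z, In z L -> P z -> Q z) -> count_on P L <= count_on Q L.
Proof. intros H. unfold count_on. induction L as [|a L IH]; simpl; auto.
  assert (IH' : length (filter (fun z => if dec (P z) then true else false) L) <=
                length (filter (fun z => if dec (Q z) then true else false) L)) by (apply IH; intros; apply H; simpl; auto).
  destruct (dec (P a)), (dec (Q a)); simpl; try lia. exfalso. apply n. apply H; simpl; auto. Qed.

Lemma count_on_lt (P Q : X -> Prop) L y : (forall z, In z L -> P z -> Q z) -> In y L -> Q y -> ~ P y ->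
  count_on P L < count_on Q L.
Proof. intros H Hy HQ HP. unfold count_on. induction L as [|a L IH]; [destruct Hy|]. simpl.
  assert (Hm : count_on P L <= count_on Q L) by (apply count_on_mono; intros; apply H; simpl; auto).
  unfold count_on in Hm.
  destruct Hy as [->|Hy].
  - destruct (dec (P y)); [contradiction|]. destruct (dec (Q y)); [|contradiction]. simpl. lia.
  - assert (IH' := IH (fun z Hz => H z (or_intror Hz)) Hy).
    destruct (dec (P a)), (dec (Q a)); simpl; try lia. exfalso. apply n. apply H; simpl; auto.
Qed.
End Count.

Section Termination.
Variables (X D : Type) (le : D -> D -> Prop) (wid nar : D -> D -> D) (f : X -> tree X D) (rho0 : X -> D).
Hypotheses (Hrefl : forall a, le a a) (Htrans : forall a b c, le a b -> le b c -> le a c)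
  (Hwid : is_widening le wid) (Hnar : is_narrowing le nar) (Hmono : monotonic le f).
Notation bx := (boxdot le wid nar).
Notation state := (state X D).

Definition post_at (s : state) (y : X) : Prop := le (evalT (srho s) (f y)) (srho s y).
Definition post_upto (s : state) (z : X) : Prop :=
  forall y, sdom s y -> (skey s y <= skey s z)%Z -> post_at s y.
Definition measure (s : state) (z : X) : bool * D :=
  (if dec (post_upto s z) then true else false, srho s z).

Definition measure_step (a b : bool * D) : Prop :=
  (fst b = false /\ fst a = true) \/
  (fst b = false /\ fst a = false /\ exists c, snd a = wid (snd b) c /\ snd a <> snd b) \/
  (fst b = true /\ fst a = true /\ exists c, le c (snd b) /\ snd a = nar (snd b) c /\ snd a <> snd b).

Definition measure_lt := clos_trans _ measure_step.

Lemma wf_measure_step : well_founded measure_step.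
Proof.
  destruct Hwid as [_ [_ HW]]. destruct Hnar as [_ HN].
  assert (AW : forall a, Acc (descends (fun a' a c => a' = wid a c /\ a' <> a)) a).
  { apply Acc_of_no_infinite_chain. intros [a [b H]]. apply HW. exists a, b. auto. }
  assert (AN : forall a, Acc (descends (fun a' a c => le c a /\ a' = nar a c /\ a' <> a)) a).
  { apply Acc_of_no_infinite_chain. intros [a [b H]]. apply HN. exists a, b. auto. }
  assert (Tt : forall d, Acc measure_step (true, d)).
  { intros d. induction (AN d) as [d _ IH]. constructor. intros [p a] H.
    destruct H as [[H _]|[[H _]|[_ [Hp [c Hc]]]]]; simpl in *; try discriminate. subst p.
    apply IH. exists c. auto. }
  intros [p d]. destruct p; auto.
  induction (AW d) as [d _ IH]. constructor. intros [p a] H.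
  destruct H as [[_ Hp]|[[_ [Hp [c Hc]]]|[H _]]]; simpl in *; try discriminate.
  - subst; auto.
  - subst p. apply IH. exists c. auto.
Qed.

Lemma wf_measure_lt : well_founded measure_lt.
Proof. apply wf_clos_trans, wf_measure_step. Qed.

Definition measure_le (a b : bool * D) : Prop := a = b \/ measure_lt a b.

Definition key_injective (s : state) : Prop :=
  forall z w, sdom s z -> sdom s w -> skey s z = skey s w -> z = w.

(* Older unknowns have larger keys and are the more significant ones. *)
Definition lex_decrease (s' s : state) : Prop :=
  exists z0, sdom s z0 /\ measure_lt (measure s' z0) (measure s z0) /\
    forall w, sdom s w -> (skey s z0 < skey s w)%Z -> measure_le (measure s' w) (measure s w).

Definition same_dom_key (s' s : state) : Prop :=
  (forall z, sdom s' z <-> sdom s z) /\ (forall z, sdom s z -> skey s' z = skey s z).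

Definition state_lt (s' s : state) : Prop :=
  ((forall z, sdom s z -> sdom s' z) /\ exists y, sdom s' y /\ ~ sdom s y) \/
  (same_dom_key s' s /\ key_injective s /\ lex_decrease s' s).

Definition state_eq (s' s : state) : Prop := same_dom_key s' s /\ forall z, srho s' z = srho s z.

Lemma measure_le_trans a b c : measure_le a b -> measure_le b c -> measure_le a c.
Proof. intros [->|H1] [->|H2]; unfold measure_le; auto. right; eapply t_trans; eauto. Qed.
Lemma measure_le_lt a b c : measure_le a b -> measure_lt b c -> measure_lt a c.
Proof. intros [->|H1] H2; auto. eapply t_trans; eauto. Qed.
Lemma measure_lt_le a b c : measure_lt a b -> measure_le b c -> measure_lt a c.
Proof. intros H1 [->|H2]; auto. eapply t_trans; eauto. Qed.

Lemma post_at_ext s s' y : (forall z, srho s' z = srho s z) -> (post_at s' y <-> post_at s y).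
Proof. intros Hr. unfold post_at. rewrite Hr.
  destruct (evalT_agree (srho s) (srho s') (f y)) as [E _]; [intros; auto|]. rewrite E. tauto. Qed.

Lemma measure_state_eq s' s z : state_eq s' s -> sdom s z -> measure s' z = measure s z.
Proof. intros [[Hd Hk] Hr] Hz. unfold measure. rewrite Hr. f_equal.
  assert (post_upto s' z <-> post_upto s z).
  { unfold post_upto. split; intros H y Hy Hky.
    - apply (post_at_ext s s' y Hr). apply H. apply Hd; auto. rewrite !Hk; auto.
    - assert (Hy' : sdom s y) by (apply Hd; auto). apply (post_at_ext s s' y Hr).
      apply H; auto. rewrite <- !Hk; auto. }
  destruct (dec (post_upto s' z)), (dec (post_upto s z)); tauto.
Qed.

Lemma state_eq_refl s : state_eq s s.
Proof. split; [split; [tauto|auto]|auto]. Qed.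

Lemma state_eq_trans s3 s2 s1 : state_eq s3 s2 -> state_eq s2 s1 -> state_eq s3 s1.
Proof. intros [[d2 k2] r2] [[d1 k1] r1]. split; [split|].
  - intros z. rewrite d2, d1. tauto.
  - intros z Hz. rewrite k2, k1; auto. apply d1; auto.
  - intros z. rewrite r2; auto.
Qed.

Lemma same_dom_key_trans s3 s2 s1 : same_dom_key s3 s2 -> same_dom_key s2 s1 -> same_dom_key s3 s1.
Proof. intros [d2 k2] [d1 k1]. split.
  - intros z. rewrite d2, d1. tauto.
  - intros z Hz. rewrite k2, k1; auto. apply d1; auto.
Qed.

Lemma state_lt_dom s' s : state_lt s' s -> forall z, sdom s z -> sdom s' z.
Proof. intros [[H _]|[[d _] _]] z Hz; auto. apply d; auto. Qed.

Lemma state_lt_trans s3 s2 s1 : state_lt s3 s2 -> state_lt s2 s1 -> state_lt s3 s1.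
Proof.
  intros H32 H21. pose proof (state_lt_dom H32) as D32. pose proof (state_lt_dom H21) as D21.
  destruct H21 as [[_ [y [Hy1 Hy2]]]|[S21 [I1 L21]]].
  - left. split; [auto|]. exists y. split; auto.
  - destruct H32 as [[_ [y [Hy1 Hy2]]]|[S32 [I2 L32]]].
    + left. split; [auto|]. exists y. split; auto.
    + right. split; [eapply same_dom_key_trans; eauto|]. split; auto.
      destruct S21 as [d21 k21]. destruct S32 as [d32 k32].
      destruct L21 as [z1 [Hz1 [R1 O1]]]. destruct L32 as [z2 [Hz2 [R2 O2]]].
      assert (Hz2' : sdom s1 z2) by (apply d21; auto).
      assert (Hz1' : sdom s2 z1) by (apply d21; auto).
      rewrite k21 in O2 by auto.
      assert (O2' : forall w, sdom s1 w -> (skey s1 z2 < skey s1 w)%Z -> measure_le (measure s3 w) (measure s2 w)).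
      { intros w Hw Hk. apply O2; [apply d21; auto|]. rewrite k21; auto. }
      destruct (Z.lt_total (skey s1 z1) (skey s1 z2)) as [Hl|[He|Hl]].
      * exists z2. split; auto. split.
        -- apply measure_lt_le with (b := measure s2 z2); [exact R2|]. apply O1; auto.
        -- intros w Hw Hkw. assert (sdom s2 w) by (apply d21; auto).
           apply measure_le_trans with (b := measure s2 w); [apply O2'; auto|].
           apply O1; auto; lia.
      * assert (z1 = z2) by (apply I1; auto). subst z2.
        exists z1. split; auto. split; [eapply t_trans; eauto|].
        intros w Hw Hkw. assert (sdom s2 w) by (apply d21; auto).
        apply measure_le_trans with (b := measure s2 w); [apply O2'; auto|]. apply O1; auto.
      * exists z1. split; auto. split.
        -- apply measure_le_lt with (b := measure s2 z1); [|exact R1]. apply O2'; auto.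
        -- intros w Hw Hkw. assert (sdom s2 w) by (apply d21; auto).
           apply measure_le_trans with (b := measure s2 w); [apply O2'; auto; lia|].
           apply O1; auto.
Qed.

Lemma state_lt_eq s2 s1 s0 : state_lt s2 s1 -> state_eq s1 s0 -> state_lt s2 s0.
Proof.
  intros H21 H10. pose proof H10 as [[d10 k10] r10].
  destruct H21 as [[Dd [y [Hy1 Hy2]]]|[S21 [I1 [z1 [Hz1 [R1 O1]]]]]].
  - left. split; [intros z Hz; apply Dd, d10; auto|]. exists y. split; auto. rewrite <- d10; auto.
  - right. split; [eapply same_dom_key_trans; eauto; apply H10|]. split.
    + intros z w Hz Hw Hk. apply I1; try apply d10; auto. rewrite !k10; auto.
    + exists z1. assert (Hz0 : sdom s0 z1) by (apply d10; auto). split; auto.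
      rewrite <- (@measure_state_eq _ _ _ H10 Hz0). split; auto. intros w Hw Hkw.
      rewrite <- (@measure_state_eq _ _ _ H10 Hw). apply O1. apply d10; auto. rewrite !k10; auto.
Qed.

Lemma state_eq_lt s2 s1 s0 : state_eq s2 s1 -> state_lt s1 s0 -> state_lt s2 s0.
Proof.
  intros H21 H10. pose proof H21 as [[d21 k21] r21].
  destruct H10 as [[Dd [y [Hy1 Hy2]]]|[S10 [I0 [z1 [Hz1 [R1 O1]]]]]].
  - left. split; [intros z Hz; apply d21, Dd; auto|]. exists y. split; auto. apply d21; auto.
  - right. split; [eapply same_dom_key_trans; eauto; apply H21|]. split; auto.
    destruct S10 as [d10 k10].
    exists z1. split; auto. rewrite (@measure_state_eq _ _ _ H21) by (apply d10; auto). split; auto.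
    intros w Hw Hkw. rewrite (@measure_state_eq _ _ _ H21) by (apply d10; auto). apply O1; auto.
Qed.

Definition state_le (s' s : state) : Prop := state_lt s' s \/ state_eq s' s.

Lemma state_le_trans s3 s2 s1 : state_le s3 s2 -> state_le s2 s1 -> state_le s3 s1.
Proof. intros [H|H] [H'|H']; unfold state_le.
  - left; eapply state_lt_trans; eauto.
  - left; eapply state_lt_eq; eauto.
  - left; eapply state_eq_lt; eauto.
  - right; eapply state_eq_trans; eauto.
Qed.
Lemma state_le_lt s3 s2 s1 : state_le s3 s2 -> state_lt s2 s1 -> state_lt s3 s1.
Proof. intros [H|H] H'. eapply state_lt_trans; eauto. eapply state_eq_lt; eauto. Qed.
Lemma state_lt_le s3 s2 s1 : state_lt s3 s2 -> state_le s2 s1 -> state_lt s3 s1.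
Proof. intros H [H'|H']. eapply state_lt_trans; eauto. eapply state_lt_eq; eauto. Qed.

Lemma le_of_boxdot_fixed a b : a = bx a b -> le b a.
Proof.
  unfold boxdot. destruct (dec (le b a)) as [H|_]; [auto|].
  intros E. rewrite E. apply (proj1 (proj2 Hwid)).
Qed.

Lemma post_at_of_solved s y : locally_solved bx f s y -> post_at s y.
Proof. intros [_ H]. apply le_of_boxdot_fixed, H. Qed.

Lemma post_at_narrowing s s' x :
  (forall w, w <> x -> srho s' w = srho s w) ->
  srho s' x = nar (srho s x) (evalT (srho s) (f x)) -> le (evalT (srho s) (f x)) (srho s x) ->
  forall y, y = x \/ post_at s y -> post_at s' y.
Proof.
  intros Hrw Hrx Hl. destruct (proj1 Hnar _ _ Hl) as [Hn1 Hn2].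
  assert (Hmon : forall z, le (srho s' z) (srho s z)).
  { intros z. destruct (dec (z = x)) as [->|Hzx]; [rewrite Hrx; exact Hn2|rewrite Hrw; auto]. }
  intros y Hy. unfold post_at in *.
  eapply Htrans; [apply (Hmono y (srho s') (srho s) Hmon)|].
  destruct (dec (y = x)) as [->|Hyx]; [rewrite Hrx; exact Hn1|].
  rewrite Hrw by exact Hyx. destruct Hy; [contradiction|assumption].
Qed.

Lemma step_update_lt s s' : step_update bx f s s' -> state_lt s' s.
Proof.
  intros [x [Hx [HN [HG [Hne [Hd [Hk Hr]]]]]]].
  pose proof HG as [g1 [g2 [g3 [g4 [g5 [g6 g7]]]]]].
  set (v := evalT (srho s) (f x)) in *.
  assert (HSD : same_dom_key s' s) by (split; auto).
  right. split; [exact HSD|]. split; [exact g6|]. exists x. split; [exact Hx|].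
  assert (Hrw : forall w, w <> x -> srho s' w = srho s w) by (intros w Hw; rewrite Hr; apply upd_neq; auto).
  assert (Hrx : srho s' x = bx (srho s x) v) by (rewrite Hr; apply upd_eq).
  assert (Holdne : forall w, sdom s w -> (skey s x < skey s w)%Z -> w <> x) by (intros w _ Hkw ->; lia).
  unfold boxdot in Hrx, Hne.
  destruct (dec (le v (srho s x))) as [Hl|Hl].
  - (* narrowing: all post conditions survive and [x] enters (or stays in) its final phase *)
    assert (Hpost : forall y, y = x \/ post_at s y -> post_at s' y)
      by (apply post_at_narrowing; auto).
    assert (HPh : post_upto s' x).
    { intros y Hy Hky. apply Hd in Hy. rewrite !Hk in Hky by auto.
      apply Hpost. destruct (dec (y = x)) as [->|Hyx]; [left; reflexivity|right].
      assert (Hlt : (skey s y < skey s x)%Z).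
      { destruct (Z.eq_dec (skey s y) (skey s x)); [|lia]. exfalso; apply Hyx; apply g6; auto. }
      apply post_at_of_solved, (HN y Hy Hlt). }
    split.
    + apply t_step. unfold measure. destruct (dec (post_upto s' x)) as [_|C]; [|contradiction].
      destruct (dec (post_upto s x)); simpl; [right; right|left; auto].
      split; auto. split; auto. exists v. rewrite Hrx. auto.
    + intros w Hw Hkw. specialize (Holdne w Hw Hkw). unfold measure. rewrite Hrw by auto.
      destruct (dec (post_upto s w)) as [Ph|Ph].
      * assert (post_upto s' w).
        { intros y Hy Hky. apply Hd in Hy. rewrite !Hk in Hky by auto. apply Hpost; right. apply Ph; auto. }
        destruct (dec (post_upto s' w)); [left; auto|contradiction].
      * destruct (dec (post_upto s' w)); [right; apply t_step; left; auto|left; auto].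
  - (* widening: [x] is still ascending, so no older unknown has its phase bit set *)
    assert (HnPx : ~ post_upto s x) by (intros Ph; apply Hl; apply (Ph x Hx); lia).
    split.
    + apply t_step. unfold measure. destruct (dec (post_upto s x)) as [C|_]; [contradiction|].
      destruct (dec (post_upto s' x)); simpl; [left; auto|right; left].
      split; auto. split; auto. exists v. rewrite Hrx. auto.
    + intros w Hw Hkw. specialize (Holdne w Hw Hkw). unfold measure. rewrite Hrw by auto.
      assert (~ post_upto s w) by (intros Ph; apply Hl; apply (Ph x Hx); lia).
      destruct (dec (post_upto s w)) as [Ph|_]; [contradiction|].
      destruct (dec (post_upto s' w)); [right; apply t_step; left; auto|left; auto].
Qed.

Lemma step_le s s' : step bx f rho0 s s' -> state_le s' s.
Proof. intros [[y [Hy ->]]|[HB|HC]].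
  - left. left. split; [simpl; auto|]. exists y. simpl; auto.
  - right. destruct HB as [a [b c]]. split; [split|]; auto.
  - left. apply step_update_lt; auto.
Qed.

Lemma trace_le s s' : trace bx f rho0 s s' -> state_le s' s.
Proof. induction 1. apply step_le; auto. right; apply state_eq_refl. eapply state_le_trans; eauto. Qed.

Lemma meta_trace_eq s s' : meta_trace s s' -> state_eq s' s.
Proof. induction 1. destruct H as [a [b c]]; split; [split|]; auto. apply state_eq_refl. eapply state_eq_trans; eauto. Qed.

Lemma progress_trace_lt s s' : progress_trace bx f rho0 s s' -> state_lt s' s.
Proof. intros [s1 [s2 [H1 [H2 H3]]]].
  apply trace_le in H1. apply trace_le in H3.
  assert (state_lt s2 s1).
  { destruct H2 as [[y [Hy ->]]|HC]. left. split; [simpl; auto|]. exists y; simpl; auto.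
    apply step_update_lt; auto. }
  eapply state_le_lt; [exact H3|]. eapply state_lt_le; eauto.
Qed.

Definition state_lt_within (L : list X) (s' s : state) : Prop := state_lt s' s /\ dom_within L s' /\ key_injective s'.
Definition missing (L : list X) (s : state) : nat := count_on (fun z => ~ sdom s z) L.

Lemma Acc_state_lt_within L : forall s, dom_within L s -> key_injective s -> Acc (state_lt_within L) s.
Proof.
  intros s. remember (missing L s) as n eqn:Hn. revert s Hn.
  induction n as [n IHn] using (well_founded_induction lt_wf).
  intros s Hn HdL Hinj.
  set (S := filter (fun z => if dec (sdom s z) then true else false) L).
  assert (HS : forall z, In z S <-> In z L /\ sdom s z).
  { intros z. unfold S. rewrite filter_In. destruct (dec (sdom s z)); intuition; discriminate. }
  assert (HA : forall c, Acc (lex_on measure_lt (skey s) S) c).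
  { intros c. apply (@Acc_lex_on X (bool * D) measure_lt (skey s) wf_measure_lt (length S)); auto.
    intros z w Hz Hw Hk. apply HS in Hz. apply HS in Hw. apply Hinj; tauto. }
  assert (Claim : forall c, Acc (lex_on measure_lt (skey s) S) c -> forall s1, measure s1 = c -> same_dom_key s1 s ->
            Acc (state_lt_within L) s1).
  { intros c Hc. induction Hc as [c _ IHc]. intros s1 Hc1 HSD. constructor.
    intros s2 [HO [HdL2 Hinj2]].
    destruct HO as [[Hsub [y [Hy2 Hy1]]]|[HSD21 [Hinj1 [z0 [Hz0 [HR Hold]]]]]].
    - apply (IHn (missing L s2)); auto.
      assert (E1 : missing L s1 = missing L s).
      { unfold missing. apply count_on_ext. intros z. destruct HSD as [Hd _]. rewrite Hd. tauto. }
      rewrite Hn, <- E1. unfold missing. apply count_on_lt with (y := y); auto.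
    - apply (IHc (measure s2)); auto.
      + rewrite <- Hc1. exists z0. destruct HSD as [Hd Hk].
        assert (Hz0S : In z0 S) by (apply HS; split; [apply HdL; apply Hd; auto|apply Hd; auto]).
        refine (conj Hz0S (conj HR _)).
        intros w Hw Hkw. apply HS in Hw. destruct Hw as [_ Hw]. apply Hold; [apply Hd; auto|].
        rewrite !Hk; auto. apply Hd; auto.
      + eapply same_dom_key_trans; eauto. }
  apply (Claim (measure s)); auto. split; [tauto|auto].
Qed.

Lemma wf_key_injective s : wf_state s -> key_injective s.
Proof. intros [_ [_ [_ [_ [_ [H _]]]]]]. exact H. Qed.

Lemma dom_within_state_eq L s' s : state_eq s' s -> dom_within L s -> dom_within L s'.
Proof. intros [[Hd _] _] H z Hz. apply H, Hd; auto. Qed.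

Lemma state_eq_add_infl x y s : state_eq (add_infl x y s) s.
Proof. split; [split|]; intros; reflexivity. Qed.

Lemma state_eq_mark_stable x s : state_eq (mark_stable x s) s.
Proof. split; [split|]; intros; reflexivity. Qed.

Lemma state_eq_pop_queue y s : state_eq (pop_queue y s) s.
Proof. split; [split|]; intros; reflexivity. Qed.

Definition solve_settles L x s := settles L (fun m => solve bx f rho0 m x s).
Definition loop_settles L x s := settles L (fun m => loop bx f rho0 m x s).

Lemma eval_rhs_settles L s0 x E K
  (IH : forall s', state_lt s' s0 -> dom_within L s' -> key_injective s' ->
        forall y E' K', solve_pre bx f y E' K' s' -> solve_settles L y s') :
  forall t sE, eval_inv bx f rho0 x E K (mark_stable x s0) t sE -> state_le sE s0 -> dom_within L sE ->
  settles L (fun m => eval_rhs rho0 (solve bx f rho0 m) x t sE).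
Proof.
  intros t. induction t as [d|y k IHt]; intros sE HEv HLe HdL.
  { left. exists sE, d, 0. intros; reflexivity. }
  assert (Hgrow : forall m s', grows s' (eval_rhs rho0 (solve bx f rho0 m) x (k (srho s' y)) (add_infl x y s'))).
  { intros m s' z Hz. apply eval_rhs_grows; [apply solve_grows|exact Hz]. }
  destruct (dec (sdom sE y)) as [Hy|Hy].
  { eapply settles_ext; [intros m; apply eval_rhs_query_old, Hy|].
    apply IHt; [apply eval_inv_query_old; auto| |intros z Hz; apply HdL, Hz].
    eapply state_le_trans; [|exact HLe]. right. apply state_eq_add_infl. }
  set (si := init rho0 y sE).
  eapply settles_ext; [intros m; apply eval_rhs_query_new, Hy|].
  pose proof HEv as [HG [HI [Hx [_ [_ [_ [HE _]]]]]]].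
  destruct (dec (In y L)) as [HyL|HyL].
  2: { apply settles_escape with (s := si); [intros Hd; apply HyL, Hd; simpl; auto|].
       intros m. apply grows_bindR; [apply solve_grows|intros s' _; apply Hgrow]. }
  assert (Hpre : solve_pre bx f y (x :: E) (skey si y) si).
  { apply solve_pre_init; auto. intros e He; apply HE, He. }
  assert (Hord : state_lt si s0).
  { eapply state_lt_le; [|exact HLe]. left. split; [simpl; auto|]. exists y; simpl; auto. }
  apply settles_bind; [|intros m s' _; apply Hgrow|].
  { eapply (IH si Hord); [intros z [->|Hz]; auto|apply wf_key_injective, wf_init; auto|exact Hpre]. }
  intros s' [] [N HN].
  pose proof (proj1 (solve_loop_sound bx f rho0 N) _ _ _ _ _ Hpre (HN N (le_n N))) as Hpost.
  destruct (dec (dom_within L s')) as [HdL'|HdL'].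
  2: { apply settles_escape with (s := s'); [exact HdL'|intros m; apply Hgrow]. }
  apply IHt; [apply eval_inv_query_new with (sE := sE); auto| |exact HdL'].
  eapply state_le_trans; [|left; exact Hord].
  eapply state_le_trans; [|apply trace_le, (solve_post_trace Hpost)].
  right. apply state_eq_add_infl.
Qed.

Section SettlesStep.
Variables (L : list X) (s : state).
Hypothesis IH : forall s', state_lt s' s -> dom_within L s' -> key_injective s' ->
  (forall y E K, solve_pre bx f y E K s' -> solve_settles L y s') /\
  (forall y E K, loop_pre bx f y E K s' -> loop_settles L y s').

Lemma solve_settles_step s0 x E K :
  state_eq s0 s -> dom_within L s0 -> solve_pre bx f x E K s0 -> solve_settles L x s0.
Proof.
  intros Heq HdL Hpre.
  assert (Hns : ~ sstable s0 x) by (destruct Hpre as [_ [_ [_ [H _]]]]; exact H).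
  apply settles_S.
  eapply settles_ext; [intros m; rewrite solve_unfold; destruct (dec (sstable s0 x)); [contradiction|reflexivity]|].
  apply settles_bind.
  - apply (eval_rhs_settles (s0 := s0) (E := E) (K := K)).
    + intros s' Ho Hd Hi. apply (proj1 (IH (state_lt_eq Ho Heq) Hd Hi)).
    + exact (eval_inv_start rho0 Hpre).
    + right. apply state_eq_mark_stable.
    + exact HdL.
  - intros m s2 v. destruct (dec _); [intros z Hz; exact Hz|intros z Hz; apply loop_grows, Hz].
  - intros s2 v [N HN].
    pose proof (eval_rhs_sound N (proj1 (solve_loop_sound bx f rho0 N)) (eval_inv_start rho0 Hpre)
      (HN N (le_n N))) as HEv.
    destruct (dec (bx (srho s0 x) v = srho s2 x)) as [_|Hne].
    { left. exists s2, tt, 0. intros; reflexivity. }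
    destruct (solve_post_changed Hpre HEv Hne) as [HpreL [HC [HH _]]].
    set (s3 := set_value x s2 (bx (srho s0 x) v)) in *.
    destruct (dec (dom_within L s3)) as [HdL3|HdL3].
    2: { apply settles_escape with (s := s3); [exact HdL3|intros m; apply loop_grows]. }
    assert (Hord3 : state_lt s3 s).
    { eapply state_lt_eq; [|exact Heq].
      eapply state_lt_le; [apply step_update_lt; exact HC|apply trace_le; exact HH]. }
    exact (proj2 (IH Hord3 HdL3 (wf_key_injective (proj1 HpreL))) x E K HpreL).
Qed.

Lemma loop_settles_step s0 x E K :
  state_eq s0 s -> dom_within L s0 -> loop_pre bx f x E K s0 -> loop_settles L x s0.
Proof.
  remember (count_on (fun z => In z (sQ s0)) L) as q eqn:Hq.
  revert s0 Hq x E K. induction q as [q IHq] using (well_founded_induction lt_wf).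
  intros s0 Hq x E K Heq HdL Hpre.
  apply settles_S.
  destruct (minQ (skey s0) (sQ s0)) as [y|] eqn:Hm.
  2: { left. exists s0, tt, 0. intros m _. rewrite loop_unfold, Hm. reflexivity. }
  destruct (Z.leb (skey s0 y) (skey s0 x)) eqn:Hleb.
  2: { left. exists s0, tt, 0. intros m _. rewrite loop_unfold, Hm, Hleb. reflexivity. }
  assert (Hle : (skey s0 y <= skey s0 x)%Z) by (apply Z.leb_le, Hleb).
  eapply settles_ext; [intros m; rewrite loop_unfold, Hm, Hleb; reflexivity|].
  assert (Hpre' := solve_pre_pop Hpre Hm Hle).
  assert (Heqp := state_eq_pop_queue y s0).
  apply settles_bind; [|intros m s'' _; apply loop_grows|].
  { apply (solve_settles_step (state_eq_trans Heqp Heq) (dom_within_state_eq Heqp HdL) Hpre'). }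
  intros s'' [] [N HN].
  pose proof (proj1 (solve_loop_sound bx f rho0 N) _ _ _ _ _ Hpre' (HN N (le_n N))) as Hpost.
  pose proof (loop_pre_after_pop Hpre Hle Hpost) as HpreL.
  destruct (dec (dom_within L s'')) as [HdL''|HdL''].
  2: { apply settles_escape with (s := s''); [exact HdL''|intros m; apply loop_grows]. }
  destruct Hpost as [_ [_ [_ [_ [[HB HQ]|HAC]]]]].
  - (* nothing changed but the queue, which lost [y] *)
    destruct (minQ_some _ _ Hm) as [HyQ _].
    apply (IHq (count_on (fun z => In z (sQ s'')) L)) with (s0 := s'') (E := E) (K := K); auto.
    + subst q. apply count_on_lt with (y := y).
      * intros z _ Hz. destruct (HQ z Hz) as [Hz' _]. apply In_removeQ in Hz'. tauto.
      * apply HdL. destruct Hpre as [[_ [g2 _]] _]. auto.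
      * exact HyQ.
      * intros Hy. destruct (HQ y Hy) as [_ C]. congruence.
    + eapply state_eq_trans; [apply meta_trace_eq; exact HB|eapply state_eq_trans; eauto].
  - assert (Hord : state_lt s'' s).
    { eapply state_lt_eq; [eapply state_lt_eq; [apply progress_trace_lt; exact HAC|exact Heqp]|exact Heq]. }
    exact (proj2 (IH Hord HdL'' (wf_key_injective (proj1 HpreL))) x E K HpreL).
Qed.

End SettlesStep.

Lemma settles_of_Acc L s : Acc (state_lt_within L) s -> forall s0, state_eq s0 s -> dom_within L s0 ->
  (forall x E K, solve_pre bx f x E K s0 -> solve_settles L x s0) /\
 (forall x E K, loop_pre bx f x E K s0 -> loop_settles L x s0).
Proof.
  induction 1 as [s _ IH]. intros s0 Heq HdL.
  assert (IH' : forall s', state_lt s' s -> dom_within L s' -> key_injective s' ->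
    (forall y E K, solve_pre bx f y E K s' -> solve_settles L y s') /\
   (forall y E K, loop_pre bx f y E K s' -> loop_settles L y s')).
  { intros s' Ho Hd Hi. exact (IH s' (conj Ho (conj Hd Hi)) s' (state_eq_refl s') Hd). }
  split; intros x E K Hpre.
  - exact (solve_settles_step IH' Heq HdL Hpre).
  - exact (loop_settles_step IH' Heq HdL Hpre).
Qed.

Lemma run_terminates x0 : (exists L : list X, forall (n : nat) (y : X),
          sdom (res_state (run bx f rho0 x0 n)) y -> In y L) ->
       exists (n : nat) (s : state),
         run bx f rho0 x0 n = Done s tt /\
        partial_post_solution le f (sdom s) (srho s) /\ sdom s x0.
Proof.
  intros [L HL].
  set (si := init rho0 x0 (empty_state rho0)).
  assert (Hpre := solve_pre_run bx f rho0 x0). fold si in Hpre.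
  assert (HdL : dom_within L si) by (intros z [->|[]]; apply (HL 0); simpl; auto).
  assert (HA := Acc_state_lt_within HdL (wf_key_injective (proj1 Hpre))).
  destruct (proj1 (settles_of_Acc HA (state_eq_refl si) HdL) x0 [] 0%Z Hpre)
    as [[s [[] [N HN]]]|[N HN]].
  - exists N, s. assert (Hr : run bx f rho0 x0 N = Done s tt) by (apply HN; lia).
    destruct (run_sound bx f rho0 x0 N Hr) as [Hsol Hx0].
    split; [exact Hr|split; [|exact Hx0]].
    intros z Hz. destruct (Hsol z Hz) as [Hdep Hfix]. split; [exact Hdep|].
    apply le_of_boxdot_fixed, Hfix.
  - exfalso. apply (HN N (le_n _)). intros z Hz. apply (HL N), Hz.
Qed.
End Termination.

Theorem mainTheorem6 :
  (forall (X D : Type) (box : D -> D -> D) (f : X -> tree X D) (rho0 : X -> D)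
          (x0 : X) (n : nat) (s : state X D),
     run box f rho0 x0 n = Done s tt ->
     partial_box_solution box f (sdom s) (srho s) /\ sdom s x0)
  /\
  (forall (X D : Type) (le : D -> D -> Prop) (wid nar : D -> D -> D)
          (f : X -> tree X D),
     directed le -> is_widening le wid -> is_narrowing le nar -> monotonic le f ->
     forall (rho0 : X -> D) (x0 : X),
       (exists L : list X, forall (n : nat) (y : X),
          sdom (res_state (run (boxdot le wid nar) f rho0 x0 n)) y -> In y L) ->
       exists (n : nat) (s : state X D),
         run (boxdot le wid nar) f rho0 x0 n = Done s tt /\
         partial_post_solution le f (sdom s) (srho s) /\ sdom s x0).
Proof.
  split.
  - intros X D box f rho0 x0 n s H. exact (run_sound box f rho0 x0 n H).
  - intros X D le wid nar f [Hrefl [Htrans _]] Hwid Hnar Hmono rho0 x0 HL.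
    exact (run_terminates rho0 Hrefl Htrans Hwid Hnar Hmono x0 HL).
Qed.
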